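(* Let $q\ge1$. Identify $\operatorname{Diff}(S^1)/S^1$ with $\{\varphi\in\operatorname{Diff}(S^1):\varphi(0)=0\}$ and equip it with the right-invariant homogeneous $\dot W^{1,q}$ Finsler metric $F_\varphi(h)=\big(\int_0^1|(h\circ\varphi^{-1})'(\theta)|^q\,d\theta\big)^{1/q}$; equip $C^\infty(S^1,\mathbb{R})$ with the flat $L^q$ metric $|\delta f|_f=\|\delta f\|_{L^q(0,1)}$. Let $\Phi:\operatorname{Diff}(S^1)/S^1\to C^\infty(S^1,\mathbb{R})$, $\Phi(\varphi)=q(\varphi')^{1/q}$. Then: (1) $\Phi$ is an isometric embedding, i.e. $\|d\Phi(\varphi).h\|_{L^q}=F_\varphi(h)$ for all $\varphi$ and tangent vectors $h$; (2) the image of $\Phi$ is the set $\mathcal{U}_q=\{f\in C^\infty(S^1;\mathbb{R}): f>0,\ \|f\|_{L^q}=q\}$; (3) the diameter of $\mathcal{U}_q$ with respect to its intrinsic distance (infimum of $L^q$-lengths $\int_0^1\|\partial_tf_t\|_{L^q}dt$ of paths $f_t$ lying in $\mathcal{U}_q$) satisfies $q<\operatorname{diam}\mathcal{U}_q\le 8q$.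
   Context: $S^1$ is identified with $[0,1]$ with endpoints identified; $\operatorname{Diff}(S^1)$ denotes the identity component of the group of smooth diffeomorphisms of $S^1$. *)

From Stdlib Require Import Reals ClassicalEpsilon.
Open Scope R_scope.

(* the derivative of f at x (chosen by epsilon; the genuine derivative
   whenever f is differentiable at x, since derivatives are unique) *)
Definition deriv (f : R -> R) (x : R) : R :=
  epsilon (inhabits 0) (fun l => derivable_pt_lim f x l).

Definition inv (f : R -> R) (y : R) : R :=
  epsilon (inhabits 0) (fun x => f x = y).

(* Riemann integral over [0,1] (the genuine one whenever f is
   Riemann integrable; RiemannInt does not depend on the proof) *)
Definition integral01 (f : R -> R) : R :=
  epsilon (inhabits 0)
    (fun r => exists pr : Riemann_integrable f 0 1, RiemannInt pr = r).

(* real power x^y for x > 0, and 0 for x <= 0 (so that 0^y = 0 for y > 0;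
   note Stdlib's Rpower 0 y = 1) *)
Definition rpow (x y : R) : R :=
  if Rlt_dec 0 x then Rpower x y else 0.

Definition Lqnorm (q : R) (f : R -> R) : R :=
  rpow (integral01 (fun x => rpow (Rabs (f x)) q)) (/ q).

Definition smooth (f : R -> R) : Prop :=
  exists g : nat -> R -> R,
    g O = f /\ forall n x, derivable_pt_lim (g n) x (g (S n) x).

Definition cont2 (G : R -> R -> R) : Prop :=
  forall t x eps, 0 < eps -> exists delta, 0 < delta /\
    forall s y, Rabs (s - t) < delta -> Rabs (y - x) < delta ->
      Rabs (G s y - G t x) < eps.

Definition smooth2 (F : R -> R -> R) : Prop :=
  exists G : nat -> nat -> R -> R -> R,
    G O O = F /\
    (forall i j t x, derivable_pt_lim (fun s => G i j s x) t (G (S i) j t x)) /\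
    (forall i j t x, derivable_pt_lim (fun y => G i j t y) x (G i (S j) t x)) /\
    (forall i j, cont2 (G i j)).

Definition is_lower_bound (E : R -> Prop) (m : R) : Prop :=
  forall x, E x -> m <= x.
Definition is_glb (E : R -> Prop) (m : R) : Prop :=
  is_lower_bound E m /\ forall b, is_lower_bound E b -> b <= m.

(* S^1 = [0,1] with endpoints identified = R/Z: functions on S^1 are
   1-periodic functions on R. *)
Definition Cinf_S1 (f : R -> R) : Prop :=
  smooth f /\ forall x, f (x + 1) = f x.

(* Diff(S^1)/S^1 = { phi in Diff_0(S^1) : phi(0) = 0 }, elements represented
   by their (unique) lift phi : R -> R with phi(x+1) = phi(x)+1, phi' > 0,
   phi(0) = 0. *)
Definition DiffS1_0 (phi : R -> R) : Prop :=
  smooth phi /\ (forall x, phi (x + 1) = phi x + 1) /\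
  (forall x, 0 < deriv phi x) /\ phi 0 = 0.

Definition tangent (h : R -> R) : Prop := Cinf_S1 h /\ h 0 = 0.

Definition Fmetric (q : R) (phi h : R -> R) : R :=
  Lqnorm q (deriv (fun th => h (inv phi th))).

Definition Phi (q : R) (phi : R -> R) : R -> R :=
  fun x => q * rpow (deriv phi x) (/ q).

Definition dPhi (q : R) (phi h : R -> R) : R -> R :=
  fun x => deriv (fun e => Phi q (fun y => phi y + e * h y) x) 0.

Definition Uq (q : R) (f : R -> R) : Prop :=
  Cinf_S1 f /\ (forall x, 0 < f x) /\ Lqnorm q f = q.

Definition Uq_path (q : R) (f g : R -> R) (F : R -> R -> R) : Prop :=
  smooth2 F /\ (forall t, 0 <= t <= 1 -> Uq q (F t)) /\
  (forall x, F 0 x = f x) /\ (forall x, F 1 x = g x).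

Definition path_length (q : R) (F : R -> R -> R) : R :=
  integral01 (fun t => Lqnorm q (fun x => deriv (fun s => F s x) t)).

Definition path_lengths (q : R) (f g : R -> R) (l : R) : Prop :=
  exists F, Uq_path q f g F /\ path_length q F = l.

Definition intrinsic_dist (q : R) (f g : R -> R) (d : R) : Prop :=
  is_glb (path_lengths q f g) d.

Definition is_diam_Uq (q : R) (D : R) : Prop :=
  (forall f g, Uq q f -> Uq q g -> exists d, intrinsic_dist q f g d) /\
  is_lub (fun d => exists f g, Uq q f /\ Uq q g /\ intrinsic_dist q f g d) D.

(* Part (1) is a pointwise computation followed by the substitution
   theta = phi(x): with a = phi' and b = h', the derivative of
   q (a + e b)^(1/q) at e = 0 is a^(1/q - 1) b, whereas
   (h o phi^-1)' = (b / a) o phi^-1, and |a^(1/q - 1) b|^q = a |b / a|^q.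

   Part (2): (Phi(phi) / q)^q = phi' is positive, 1-periodic and of integral
   phi(1) - phi(0) = 1; conversely f in U_q is the image of the primitive of
   the probability density (f / q)^q.

   Part (3), upper bound: writing f = q a^(1/q) and g = q b^(1/q) with
   densities a, b, the path q (a + s(t) (b - a))^(1/q), with
   s(t) = (1 - cos (pi t)) / 2, stays in U_q. Since m := a + s (b - a) is at
   least s b and at least (1 - s) a, the speed of the path is at most
   s' (s^(1/q - 1) + (1 - s)^(1/q - 1)), the derivative of
   q s^(1/q) - q (1 - s)^(1/q), so the length is at most 2q.
   Lower bound: by Jensen the L^q speed dominates the L^1 speed, and by
   Fubini the length of any path from f to g is at least ||g - f||_1. The
   normalisations of (1 + w) / 2 and (1 - w) / 2, where w is a steep smoothing
   of the sign of sin (2 pi x), lie in U_q, and their L^1 distance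
   (q / ||(1 + w) / 2||_q) ||w||_1 exceeds q because ||w||_1 >= 1 - 3/(8q)
   while ||(1 + w) / 2||_q <= (1/2)^(1/q). *)

From Stdlib Require Import Reals Lra FunctionalExtensionality ClassicalEpsilon.
From Coquelicot Require Import Coquelicot.
Open Scope R_scope.

(** * Derivatives and smooth functions *)

Lemma deriv_eq_lim f x l : derivable_pt_lim f x l -> deriv f x = l.
Proof.
  intro H. unfold deriv.
  pose proof (epsilon_spec (inhabits 0) (fun l => derivable_pt_lim f x l) (ex_intro _ l H)).
  apply (uniqueness_limite f x); auto.
Qed.

Lemma derivable_pt_lim_val f x l l' : l = l' -> derivable_pt_lim f x l -> derivable_pt_lim f x l'.
Proof. intros; subst; auto. Qed.
Lemma is_derive_val (f : R -> R) (x l l' : R) : l = l' -> is_derive f x l -> is_derive f x l'.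
Proof. intros; subst; auto. Qed.

Lemma derivable_pt_lim_plus' f g x a b : derivable_pt_lim f x a -> derivable_pt_lim g x b ->
  derivable_pt_lim (fun y => f y + g y) x (a + b).
Proof. intros; apply (derivable_pt_lim_plus f g); auto. Qed.
Lemma derivable_pt_lim_mult' f g x a b : derivable_pt_lim f x a -> derivable_pt_lim g x b ->
  derivable_pt_lim (fun y => f y * g y) x (a * g x + f x * b).
Proof. intros; apply (derivable_pt_lim_mult f g); auto. Qed.
Lemma derivable_pt_lim_comp' f g x a b : derivable_pt_lim g x a -> derivable_pt_lim f (g x) b ->
  derivable_pt_lim (fun y => f (g y)) x (b * a).
Proof. intros; apply (derivable_pt_lim_comp g f); auto. Qed.

Lemma derivable_pt_lim_shift1 f x l : derivable_pt_lim f (x + 1) l ->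
  derivable_pt_lim (fun y => f (y + 1)) x l.
Proof.
  intro H. apply derivable_pt_lim_val with (l * 1); [ring|].
  apply (derivable_pt_lim_comp' f (fun y => y + 1)); auto.
  apply derivable_pt_lim_val with (1 + 0); [ring|].
  apply derivable_pt_lim_plus'; [apply derivable_pt_lim_id | apply derivable_pt_lim_const].
Qed.

Fixpoint Dn (n : nat) (f : R -> R) : Prop :=
  match n with O => True
  | S m => exists f', (forall x, derivable_pt_lim f x (f' x)) /\ Dn m f' end.

Fixpoint Dn_pos (n : nat) (f : R -> R) : Prop :=
  match n with O => True
  | S m => exists f', (forall x, 0 < x -> derivable_pt_lim f x (f' x)) /\ Dn_pos m f' end.

Lemma Dn_S n : forall f, Dn (S n) f -> Dn n f.
Proof. induction n; simpl; auto. intros f [f' [H1 H2]]. exists f'; split; auto. Qed.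

Lemma smooth_iff_Dn f : smooth f <-> forall n, Dn n f.
Proof.
  split.
  - intros [g [H0 H]] n. subst f. generalize 0%nat as k. induction n; simpl; auto.
    intro k. exists (g (S k)). split; auto.
  - intros H. exists (fun n => Nat.iter n deriv f). split; [reflexivity|].
    assert (K: forall n m, Dn m (Nat.iter n deriv f)).
    { induction n; simpl; auto. intro m.
      destruct (IHn (S m)) as [f' [Hd Hm]].
      replace (deriv (Nat.iter n deriv f)) with f'; auto.
      apply functional_extensionality; intro x. symmetry; apply deriv_eq_lim; auto. }
    intros n x. destruct (K n 1%nat) as [f' [Hd _]]. simpl.
    rewrite (deriv_eq_lim _ _ _ (Hd x)). auto.
Qed.

Lemma Dn_ext n f g : (forall x, f x = g x) -> Dn n f -> Dn n g.
Proof. intros H. replace g with f; auto. apply functional_extensionality; auto. Qed.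

Lemma Dn_const c n : Dn n (fun _ => c).
Proof.
  revert c; induction n; simpl; auto. intro c.
  exists (fun _ => 0). split; auto. intro; apply derivable_pt_lim_const.
Qed.
Lemma Dn_id n : Dn n (fun x => x).
Proof.
  destruct n; simpl; auto.
  exists (fun _ => 1). split; [intro; apply derivable_pt_lim_id | apply Dn_const].
Qed.

Lemma Dn_plus n : forall f g, Dn n f -> Dn n g -> Dn n (fun x => f x + g x).
Proof.
  induction n; simpl; auto. intros f g [f' [Hf Hf']] [g' [Hg Hg']].
  exists (fun x => f' x + g' x). split; auto. intro; apply derivable_pt_lim_plus'; auto.
Qed.

Lemma Dn_mult n : forall f g, Dn n f -> Dn n g -> Dn n (fun x => f x * g x).
Proof.
  induction n; simpl; auto. intros f g Df Dg.
  destruct Df as [f' [Hf Hf']], Dg as [g' [Hg Hg']].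
  exists (fun x => f' x * g x + f x * g' x). split.
  - intro; apply derivable_pt_lim_mult'; auto.
  - apply Dn_plus; apply IHn; auto; apply Dn_S; simpl; eauto.
Qed.

Lemma Dn_scal n c f : Dn n f -> Dn n (fun x => c * f x).
Proof. intro; apply Dn_mult; auto; apply Dn_const. Qed.
Lemma Dn_opp n f : Dn n f -> Dn n (fun x => - f x).
Proof. intro. apply Dn_ext with (fun x => (-1) * f x); [intro; ring | apply Dn_scal; auto]. Qed.
Lemma Dn_minus n f g : Dn n f -> Dn n g -> Dn n (fun x => f x - g x).
Proof. intros. apply Dn_plus; auto. apply Dn_opp; auto. Qed.

Lemma Dn_comp n : forall f g, Dn n f -> Dn n g -> Dn n (fun x => f (g x)).
Proof.
  induction n; simpl; auto. intros f g Df Dg.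
  destruct Df as [f' [Hf Hf']], Dg as [g' [Hg Hg']].
  exists (fun x => f' (g x) * g' x). split.
  - intro; apply derivable_pt_lim_comp'; auto.
  - apply Dn_mult; auto. apply IHn; auto. apply Dn_S; simpl; eauto.
Qed.

Lemma Dn_comp_pos n : forall f g, Dn_pos n f -> Dn n g -> (forall x, 0 < g x) ->
  Dn n (fun x => f (g x)).
Proof.
  induction n; simpl; auto. intros f g Df Dg Hpos.
  destruct Df as [f' [Hf Hf']], Dg as [g' [Hg Hg']].
  exists (fun x => f' (g x) * g' x). split.
  - intro; apply derivable_pt_lim_comp'; auto.
  - apply Dn_mult; auto. apply IHn; auto. apply Dn_S; simpl; eauto.
Qed.

Lemma Dn_pos_scal_Rpower n : forall c k, Dn_pos n (fun x => k * Rpower x c).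
Proof.
  induction n; simpl; auto. intros c k.
  exists (fun x => (k * c) * Rpower x (c - 1)). split; auto.
  intros x Hx. apply derivable_pt_lim_val with (0 * Rpower x c + k * (c * Rpower x (c - 1))); [ring|].
  apply (derivable_pt_lim_mult' (fun _ => k) (fun y => Rpower y c)).
  - apply derivable_pt_lim_const.
  - apply derivable_pt_lim_power; auto.
Qed.

Lemma Dn_pos_Rpower n c : Dn_pos n (fun z => Rpower z c).
Proof.
  replace (fun z => Rpower z c) with (fun z => 1 * Rpower z c) by
    (apply functional_extensionality; intro; ring).
  apply Dn_pos_scal_Rpower.
Qed.

Lemma Dn_sin_cos n : Dn n sin /\ Dn n cos.
Proof.
  induction n; simpl; auto. destruct IHn as [Hs Hc]. split.
  - exists cos. split; auto. intro; apply derivable_pt_lim_sin.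
  - exists (fun x => - sin x). split. intro; apply derivable_pt_lim_cos. apply Dn_opp; auto.
Qed.

Lemma smooth_ext f g : (forall x, f x = g x) -> smooth f -> smooth g.
Proof. intros H. replace g with f; auto. apply functional_extensionality; auto. Qed.
Lemma smooth_const c : smooth (fun _ => c).
Proof. apply smooth_iff_Dn; intro; apply Dn_const. Qed.
Lemma smooth_id : smooth (fun x => x).
Proof. apply smooth_iff_Dn; intro; apply Dn_id. Qed.
Lemma smooth_plus f g : smooth f -> smooth g -> smooth (fun x => f x + g x).
Proof. rewrite !smooth_iff_Dn; intros; apply Dn_plus; auto. Qed.
Lemma smooth_minus f g : smooth f -> smooth g -> smooth (fun x => f x - g x).
Proof. rewrite !smooth_iff_Dn; intros; apply Dn_minus; auto. Qed.
Lemma smooth_mult f g : smooth f -> smooth g -> smooth (fun x => f x * g x).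
Proof. rewrite !smooth_iff_Dn; intros; apply Dn_mult; auto. Qed.
Lemma smooth_scal c f : smooth f -> smooth (fun x => c * f x).
Proof. rewrite !smooth_iff_Dn; intros; apply Dn_scal; auto. Qed.
Lemma smooth_comp f g : smooth f -> smooth g -> smooth (fun x => f (g x)).
Proof. rewrite !smooth_iff_Dn; intros; apply Dn_comp; auto. Qed.
Lemma smooth_sin : smooth sin.
Proof. apply smooth_iff_Dn; intro; apply Dn_sin_cos. Qed.
Lemma smooth_cos : smooth cos.
Proof. apply smooth_iff_Dn; intro; apply Dn_sin_cos. Qed.
Lemma smooth_Rpower c g : smooth g -> (forall x, 0 < g x) -> smooth (fun x => Rpower (g x) c).
Proof.
  rewrite !smooth_iff_Dn; intros Hg Hp n.
  apply (Dn_comp_pos n (fun y => Rpower y c) g); auto. apply Dn_pos_Rpower.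
Qed.

Lemma smooth_derivable f : smooth f -> forall x, derivable_pt_lim f x (deriv f x).
Proof. intros [g [H0 H]] x. subst f. rewrite (deriv_eq_lim _ _ _ (H 0%nat x)). auto. Qed.
Lemma smooth_deriv f : smooth f -> smooth (deriv f).
Proof.
  intros [g [H0 H]]. exists (fun n => g (S n)). split; auto.
  apply functional_extensionality; intro x. subst f. symmetry; apply deriv_eq_lim; auto.
Qed.
Lemma smooth_continuous f : smooth f -> forall x, continuity_pt f x.
Proof.
  intros H x. apply derivable_continuous_pt. exists (deriv f x). apply smooth_derivable; auto.
Qed.

Lemma deriv_lift_periodic phi : smooth phi -> (forall x, phi (x + 1) = phi x + 1) ->
  forall x, deriv phi (x + 1) = deriv phi x.
Proof.
  intros Hs Hp x. symmetry. apply deriv_eq_lim.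
  apply derivable_pt_lim_ext with (fun y => phi (y + 1) - 1); [intro; rewrite Hp; ring|].
  apply derivable_pt_lim_val with (deriv phi (x + 1) - 0); [ring|].
  apply derivable_pt_lim_minus; [|apply derivable_pt_lim_const].
  apply derivable_pt_lim_shift1, smooth_derivable; auto.
Qed.

(** * Real powers *)

Lemma rpow_Rpower x y : 0 < x -> rpow x y = Rpower x y.
Proof. intro H; unfold rpow; destruct (Rlt_dec 0 x); [auto | lra]. Qed.
Lemma rpow_nonpos x y : x <= 0 -> rpow x y = 0.
Proof. intro H; unfold rpow; destruct (Rlt_dec 0 x); [lra | auto]. Qed.
Lemma Rpower_gt_0 x y : 0 < Rpower x y.
Proof. unfold Rpower; apply exp_pos. Qed.
Lemma rpow_ge_0 x y : 0 <= rpow x y.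
Proof. unfold rpow; destruct (Rlt_dec 0 x); [left; apply Rpower_gt_0 | lra]. Qed.

Lemma Rpower_Rpower_inv x c : 0 < x -> c <> 0 -> Rpower (Rpower x c) (/ c) = x.
Proof. intros. rewrite Rpower_mult, Rinv_r; auto. apply Rpower_1; auto. Qed.
Lemma rpow_rpow_inv x c : 0 < x -> c <> 0 -> rpow (rpow x c) (/ c) = x.
Proof.
  intros. rewrite (rpow_Rpower x), rpow_Rpower; auto using Rpower_gt_0, Rpower_Rpower_inv.
Qed.

Lemma Rpower_pred_mult A q : 0 < A -> Rpower A (q - 1) * A = Rpower A q.
Proof. intro. rewrite <- (Rpower_1 A) at 2 by auto. rewrite <- Rpower_plus. f_equal; ring. Qed.

Lemma Rpower_1_l c : Rpower 1 c = 1.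
Proof. unfold Rpower. rewrite ln_1, Rmult_0_r, exp_0. auto. Qed.

Lemma Rpower_le_1 s c : 0 < s <= 1 -> 0 <= c -> Rpower s c <= 1.
Proof. intros. rewrite <- (Rpower_1_l c). apply Rle_Rpower_l; lra. Qed.

Lemma Rpower_le_nonpos_exp c x y : c <= 0 -> 0 < x <= y -> Rpower y c <= Rpower x c.
Proof.
  intros Hc [Hx [Hxy|Hxy]]; [| subst; lra].
  pose proof (ln_increasing x y Hx Hxy). unfold Rpower.
  destruct (Req_dec c 0) as [->|]; [rewrite !Rmult_0_l; lra|].
  left. apply exp_increasing. nra.
Qed.

Lemma rpow_le_compat x y c : 0 < c -> x <= y -> rpow x c <= rpow y c.
Proof.
  intros Hc Hxy. destruct (Rlt_dec 0 x).
  - rewrite !rpow_Rpower by lra. apply Rle_Rpower_l; lra.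
  - rewrite (rpow_nonpos x) by lra. apply rpow_ge_0.
Qed.

Lemma rpow_mult_distr x y c : 0 < c -> 0 <= x -> 0 <= y -> rpow (x * y) c = rpow x c * rpow y c.
Proof.
  intros Hc [Hx|Hx] [Hy|Hy].
  - rewrite !rpow_Rpower by (try apply Rmult_lt_0_compat; auto). rewrite Rpower_mult_distr; auto.
  - subst. rewrite Rmult_0_r, !(rpow_nonpos 0) by lra. ring.
  - subst. rewrite Rmult_0_l, !(rpow_nonpos 0) by lra. ring.
  - subst. rewrite Rmult_0_l, !(rpow_nonpos 0) by lra. ring.
Qed.

Lemma rpow_subadditive u v r : 0 < r <= 1 -> 0 <= u -> 0 <= v ->
  rpow (u + v) r <= rpow u r + rpow v r.
Proof.
  intros Hr [Hu|Hu] [Hv|Hv]; try (subst; rewrite ?Rplus_0_r, ?Rplus_0_l, (rpow_nonpos 0); lra).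
  rewrite !rpow_Rpower by lra.
  rewrite <- (Rpower_pred_mult (u + v)), <- (Rpower_pred_mult u), <- (Rpower_pred_mult v) by lra.
  assert (Rpower (u + v) (r - 1) <= Rpower u (r - 1)) by (apply Rpower_le_nonpos_exp; lra).
  assert (Rpower (u + v) (r - 1) <= Rpower v (r - 1)) by (apply Rpower_le_nonpos_exp; lra).
  pose proof (Rpower_gt_0 (u + v) (r - 1)). nra.
Qed.

(* Convexity of y |-> y^q: the graph lies above its tangent line at A. *)
Lemma Rpower_tangent_le A y q : 1 <= q -> 0 < A -> 0 <= y ->
  Rpower A q + q * Rpower A (q - 1) * (y - A) <= rpow y q.
Proof.
  intros Hq HA Hy. pose proof (Rpower_pred_mult A q HA) as E.
  pose proof (Rpower_gt_0 A q). pose proof (Rpower_gt_0 A (q - 1)).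
  destruct Hy as [Hy|Hy]; [| subst y; rewrite rpow_nonpos by lra; nra].
  rewrite rpow_Rpower by auto.
  set (k := fun z => Rpower z q - q * Rpower A (q - 1) * z).
  set (dk := fun z => q * Rpower z (q - 1) - q * Rpower A (q - 1)).
  assert (Dk: forall z, 0 < z -> derivable_pt_lim k z (dk z)).
  { intros z Hz. apply derivable_pt_lim_minus; [apply derivable_pt_lim_power; auto|].
    apply derivable_pt_lim_val with (0 * z + q * Rpower A (q - 1) * 1); [ring|].
    apply (derivable_pt_lim_mult' (fun _ => q * Rpower A (q - 1)) (fun z => z)).
    - apply derivable_pt_lim_const.
    - apply derivable_pt_lim_id. }
  assert (Hmin: forall z, Rmin A y <= z -> 0 < z) by (intros z Hz; pose proof (Rmin_glb_lt A y 0); lra).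
  assert (K: k A <= k y).
  { destruct (MVT_gen k A y dk) as [c [Hc Hk]].
    - intros x Hx. apply is_derive_Reals, Dk, Hmin; lra.
    - intros x Hx. apply derivable_continuous_pt. exists (dk x). apply Dk, Hmin; lra.
    - assert (0 < c) by (apply Hmin; lra).
      assert (0 <= dk c * (y - A)).
      { unfold dk. replace (_ * (y - A)) with (q * ((Rpower c (q - 1) - Rpower A (q - 1)) * (y - A))) by ring.
        apply Rmult_le_pos; [lra|]. destruct (Rle_dec A y).
        - rewrite Rmin_left, Rmax_right in Hc by lra.
          assert (Rpower A (q - 1) <= Rpower c (q - 1)) by (apply Rle_Rpower_l; lra).
          apply Rmult_le_pos; lra.
        - rewrite Rmin_right, Rmax_left in Hc by lra.
          assert (Rpower c (q - 1) <= Rpower A (q - 1)) by (apply Rle_Rpower_l; lra).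
          replace (_ * (y - A)) with ((Rpower A (q - 1) - Rpower c (q - 1)) * (A - y)) by ring.
          apply Rmult_le_pos; lra. }
      lra. }
  unfold k in K. rewrite Rmult_assoc, E in K. nra.
Qed.

Lemma Rpower_lt_of_lt_root eps c : 0 < c -> 0 < eps ->
  forall y, 0 < y < Rpower eps (/ c) -> Rpower y c < eps.
Proof.
  intros Hc He y Hy. replace eps with (Rpower (Rpower eps (/ c)) c).
  - apply Rlt_Rpower_l; lra.
  - rewrite Rpower_mult, Rinv_l by lra. apply Rpower_1; auto.
Qed.

Lemma continuity_pt_Rpower c z : 0 < z -> continuity_pt (fun y => Rpower y c) z.
Proof.
  intro. apply derivable_continuous_pt. exists (c * Rpower z (c - 1)).
  apply derivable_pt_lim_power; auto.
Qed.

Lemma ball_R x r y : ball x r y -> Rabs (y - x) < r.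
Proof. auto. Qed.

(* Because [rpow] is 0 on nonpositive bases, it is continuous at 0 for c > 0. *)
Lemma continuity_pt_rpow_base c y : 0 < c -> continuity_pt (fun z => rpow z c) y.
Proof.
  intros Hc. apply continuity_pt_locally. intros eps.
  destruct (Rtotal_order y 0) as [Hy|[Hy|Hy]].
  - exists (mkposreal (- y) ltac:(lra)). intros u Hu%ball_R. simpl in Hu.
    apply Rabs_def2 in Hu. rewrite !rpow_nonpos by lra.
    apply (ball_center 0 eps).
  - subst y. exists (mkposreal (Rpower eps (/ c)) (Rpower_gt_0 _ _)).
    intros u Hu%ball_R. simpl in Hu. rewrite Rminus_0_r in Hu.
    rewrite (rpow_nonpos 0) by lra. apply (Rabs_lt_between' _ _ eps).
    destruct (Rlt_dec 0 u).
    + rewrite rpow_Rpower by auto. pose proof (Rpower_gt_0 u c).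
      assert (Rpower u c < eps) by (apply Rpower_lt_of_lt_root; auto; [apply cond_pos | apply Rabs_def2 in Hu; lra]).
      lra.
    + rewrite rpow_nonpos by lra. pose proof (cond_pos eps). lra.
  - destruct (proj1 (continuity_pt_locally _ _) (continuity_pt_Rpower c y Hy) eps) as [d Hd].
    exists (mkposreal (Rmin d y) ltac:(apply Rmin_pos; [apply cond_pos | lra])).
    intros u Hu%ball_R. simpl in Hu.
    assert (Hu1: Rabs (u - y) < d) by (eapply Rlt_le_trans; [apply Hu | apply Rmin_l]).
    assert (Hu2: Rabs (u - y) < y) by (eapply Rlt_le_trans; [apply Hu | apply Rmin_r]).
    apply Rabs_def2 in Hu2. rewrite !rpow_Rpower by lra. apply Hd, Hu1.
Qed.

Lemma Lqnorm_eq_q_iff q f : 0 < q ->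
  Lqnorm q f = q <-> integral01 (fun x => rpow (Rabs (f x)) q) = Rpower q q.
Proof.
  unfold Lqnorm. intros Hq. set (I := integral01 _). split; intro H.
  - destruct (Rlt_dec 0 I).
    + rewrite rpow_Rpower in H by auto. rewrite <- H at 1.
      rewrite Rpower_mult, Rinv_l, Rpower_1 by lra; auto.
    + rewrite rpow_nonpos in H by lra. lra.
  - rewrite H, rpow_Rpower by apply Rpower_gt_0. apply Rpower_Rpower_inv; lra.
Qed.

(** * Continuity and integrals *)

Lemma continuity_pt_comp' f g x : continuity_pt g x -> continuity_pt f (g x) ->
  continuity_pt (fun y => f (g y)) x.
Proof. intros; apply (continuity_pt_comp g f); auto. Qed.
Lemma continuity_pt_mult' f g x : continuity_pt f x -> continuity_pt g x ->
  continuity_pt (fun y => f y * g y) x.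
Proof. intros; apply (continuity_pt_mult f g); auto. Qed.
Lemma continuity_pt_plus' f g x : continuity_pt f x -> continuity_pt g x ->
  continuity_pt (fun y => f y + g y) x.
Proof. intros; apply (continuity_pt_plus f g); auto. Qed.
Lemma continuity_pt_minus' f g x : continuity_pt f x -> continuity_pt g x ->
  continuity_pt (fun y => f y - g y) x.
Proof. intros; apply (continuity_pt_minus f g); auto. Qed.
Lemma continuity_pt_inv' f x : continuity_pt f x -> f x <> 0 -> continuity_pt (fun y => / f y) x.
Proof. intros; apply (continuity_pt_inv f); auto. Qed.
Lemma continuity_pt_const' c x : continuity_pt (fun _ => c) x.
Proof. apply continuity_pt_const; intros ? ?; auto. Qed.
Lemma continuity_pt_abs f x : continuity_pt f x -> continuity_pt (fun y => Rabs (f y)) x.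
Proof. intros; apply (continuity_pt_comp' Rabs f x); [auto | apply Rcontinuity_abs]. Qed.
Lemma continuity_pt_rpow f c x : 0 < c -> continuity_pt f x -> continuity_pt (fun y => rpow (f y) c) x.
Proof. intros; apply (continuity_pt_comp' (fun z => rpow z c) f x); auto using continuity_pt_rpow_base. Qed.

Lemma continuity_pt_continuous f x : continuity_pt f x -> continuous f x.
Proof. intro H. apply continuity_pt_filterlim; auto. Qed.

Lemma ex_RInt_of_continuity f a b : (forall x, continuity_pt f x) -> ex_RInt f a b.
Proof.
  intros H. apply (@ex_RInt_continuous R_CompleteNormedModule).
  intros; apply continuity_pt_continuous; auto.
Qed.
Lemma ex_RInt_continuity_on f a b : a <= b -> (forall x, a <= x <= b -> continuity_pt f x) ->
  ex_RInt f a b.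
Proof.
  intros Hab H. apply (@ex_RInt_continuous R_CompleteNormedModule). intros z Hz.
  apply continuity_pt_continuous, H. rewrite Rmin_left, Rmax_right in Hz; auto.
Qed.
Lemma smooth_ex_RInt g a b : smooth g -> ex_RInt g a b.
Proof. intro; apply ex_RInt_of_continuity, smooth_continuous; auto. Qed.

Lemma integral01_RInt f : ex_RInt f 0 1 -> integral01 f = RInt f 0 1.
Proof.
  intro H. unfold integral01. pose proof (ex_RInt_Reals_0 _ _ _ H) as pr.
  destruct (epsilon_spec (inhabits 0) (fun r => exists pr : Riemann_integrable f 0 1, RiemannInt pr = r)
     (ex_intro _ (RiemannInt pr) (ex_intro _ pr eq_refl))) as [pr' <-].
  symmetry. apply RInt_Reals.
Qed.

Lemma RInt_ext_R (f g : R -> R) a b : (forall x, f x = g x) -> RInt f a b = RInt g a b.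
Proof. intro H. apply RInt_ext. intros; apply H. Qed.
Lemma RInt_const_R (c a b : R) : RInt (fun _ => c) a b = (b - a) * c.
Proof. rewrite RInt_const. reflexivity. Qed.
Lemma RInt_scal_R (g : R -> R) c a b : ex_RInt g a b -> RInt (fun x => c * g x) a b = c * RInt g a b.
Proof. intro H. apply (@RInt_scal R_CompleteNormedModule g a b c H). Qed.
Lemma RInt_plus_R (f g : R -> R) a b : ex_RInt f a b -> ex_RInt g a b ->
  RInt (fun x => f x + g x) a b = RInt f a b + RInt g a b.
Proof. intros. apply (@RInt_plus R_CompleteNormedModule); auto. Qed.
Lemma RInt_minus_R (f g : R -> R) a b : ex_RInt f a b -> ex_RInt g a b ->
  RInt (fun x => f x - g x) a b = RInt f a b - RInt g a b.
Proof. intros. apply (@RInt_minus R_CompleteNormedModule); auto. Qed.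
Lemma RInt_Chasles_R (f : R -> R) a b c : ex_RInt f a b -> ex_RInt f b c ->
  RInt f a b + RInt f b c = RInt f a c.
Proof. intros. apply (@RInt_Chasles R_CompleteNormedModule); auto. Qed.

Lemma RInt_affine (g : R -> R) c1 c2 A : ex_RInt g 0 1 ->
  RInt (fun x => c1 + c2 * (g x - A)) 0 1 = c1 + c2 * (RInt g 0 1 - A).
Proof.
  intro Hg. rewrite (RInt_ext_R _ (fun x => (c1 - c2 * A) + c2 * g x)) by (intros; ring).
  assert (Hs: ex_RInt (fun x => c2 * g x) 0 1) by (apply (@ex_RInt_scal R_CompleteNormedModule); auto).
  rewrite RInt_plus_R, RInt_const_R, RInt_scal_R by
    (auto; apply (@ex_RInt_const R_CompleteNormedModule)).
  simpl; ring.
Qed.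

Lemma is_derive_RInt_upper f a x : (forall y, continuity_pt f y) ->
  is_derive (fun b => RInt f a b) x (f x).
Proof.
  intros H. apply (@is_derive_RInt R_CompleteNormedModule f (fun b => RInt f a b) a x).
  - apply filter_forall. intro b. apply (@RInt_correct R_CompleteNormedModule).
    apply ex_RInt_of_continuity; auto.
  - apply continuity_pt_continuous; auto.
Qed.

Lemma RInt_derivative f df a b : (forall x, is_derive f x (df x)) -> (forall x, continuity_pt df x) ->
  RInt df a b = f b - f a.
Proof.
  intros H1 H2. apply (@is_RInt_unique R_CompleteNormedModule).
  apply (@is_RInt_derive R_CompleteNormedModule); intros; auto using continuity_pt_continuous.
Qed.

Lemma RInt_deriv_smooth f a b : smooth f -> RInt (deriv f) a b = f b - f a.
Proof.
  intros H. apply RInt_derivative.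
  - intro x. apply is_derive_Reals, smooth_derivable; auto.
  - apply smooth_continuous, smooth_deriv; auto.
Qed.

Lemma derive_zero_const g : (forall x, is_derive g x 0) -> forall x y, g x = g y.
Proof.
  intros H x y. destruct (MVT_gen g y x (fun _ => 0)) as [c [_ Hc]]; [auto | | lra].
  intros. apply derivable_continuous_pt. exists 0. apply is_derive_Reals; auto.
Qed.

Lemma RInt_period p c : (forall x, continuity_pt p x) -> (forall x, p (x + 1) = p x) ->
  RInt p c (c + 1) = RInt p 0 1.
Proof.
  intros Hc Hp.
  set (g := fun c => RInt p 0 (c + 1) - RInt p 0 c).
  assert (E: forall d, RInt p d (d + 1) = g d).
  { intro d. unfold g. rewrite <- (RInt_Chasles_R p 0 d (d + 1)) by (apply ex_RInt_of_continuity; auto).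
    lra. }
  rewrite E, <- (Rplus_0_l 1), E. apply derive_zero_const. intro x.
  apply (is_derive_val _ _ (p (x + 1) - p x)); [rewrite Hp; ring|].
  apply is_derive_Reals, derivable_pt_lim_minus.
  - apply (derivable_pt_lim_shift1 (fun b => RInt p 0 b)), is_derive_Reals, is_derive_RInt_upper; auto.
  - apply is_derive_Reals, is_derive_RInt_upper; auto.
Qed.

Lemma RInt_translate_periodic p c : (forall x, continuity_pt p x) -> (forall x, p (x + 1) = p x) ->
  RInt (fun x => p (x + c)) 0 1 = RInt p 0 1.
Proof.
  intros Hc Hp. rewrite <- (RInt_period p c) by auto.
  pose proof (@RInt_comp_lin R_CompleteNormedModule p 1 c 0 1) as E.
  replace (1 * 0 + c) with c in E by ring. replace (1 * 1 + c) with (c + 1) in E by ring.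
  rewrite <- E by (apply ex_RInt_of_continuity; auto). apply RInt_ext. intros.
  unfold scal; simpl; unfold mult; simpl. rewrite !Rmult_1_l. reflexivity.
Qed.

(** * Lifts of circle diffeomorphisms *)

Section Lift.
Variable phi : R -> R.
Hypothesis phi_smooth : smooth phi.
Hypothesis phi_lift : forall x, phi (x + 1) = phi x + 1.
Hypothesis phi_deriv_pos : forall x, 0 < deriv phi x.

Lemma phi_continuous x : continuity_pt phi x.
Proof. apply smooth_continuous; auto. Qed.

Lemma phi_increasing x y : x < y -> phi x < phi y.
Proof.
  intro Hxy. destruct (MVT_gen phi x y (deriv phi)) as [c [_ Hc]].
  - intros; apply is_derive_Reals, smooth_derivable; auto.
  - intros; apply phi_continuous.
  - pose proof (phi_deriv_pos c).
    assert (0 < deriv phi c * (y - x)) by (apply Rmult_lt_0_compat; lra). lra.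
Qed.

Lemma phi_plus_INR n x : phi (x + INR n) = phi x + INR n.
Proof.
  induction n; [simpl; rewrite !Rplus_0_r; auto|].
  rewrite S_INR, <- Rplus_assoc, phi_lift, IHn. ring.
Qed.

Lemma phi_surjective y : exists x, phi x = y.
Proof.
  destruct (INR_archimed 1 (Rabs y + Rabs (phi 0))) as [n Hn]; [lra|]. rewrite Rmult_1_r in Hn.
  assert (E1: phi (INR n) = phi 0 + INR n) by (rewrite <- phi_plus_INR; f_equal; ring).
  assert (E2: phi (- INR n) = phi 0 - INR n).
  { pose proof (phi_plus_INR n (- INR n)) as E. rewrite Rplus_opp_l in E. lra. }
  pose proof (Rle_abs y). pose proof (Rle_abs (- y)). pose proof (Rle_abs (phi 0)).
  pose proof (Rle_abs (- phi 0)). rewrite Rabs_Ropp in *.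
  destruct (IVT_gen phi (- INR n) (INR n) y) as [x [_ Hx]].
  - intro; apply phi_continuous.
  - rewrite E1, E2, Rmin_left, Rmax_right by lra. lra.
  - exists x; auto.
Qed.

Lemma phi_injective x y : phi x = phi y -> x = y.
Proof.
  intro E. destruct (Rtotal_order x y) as [H|[H|H]]; auto;
    apply phi_increasing in H; lra.
Qed.

Lemma phi_inv_r y : phi (inv phi y) = y.
Proof.
  unfold inv. destruct (phi_surjective y) as [x Hx].
  apply (epsilon_spec (inhabits 0) (fun x => phi x = y)). exists x; auto.
Qed.

Lemma phi_inv_l x : inv phi (phi x) = x.
Proof. apply phi_injective, phi_inv_r. Qed.

Lemma inv_increasing x y : x < y -> inv phi x < inv phi y.
Proof.
  intro H. destruct (Rtotal_order (inv phi x) (inv phi y)) as [H1|[H1|H1]]; auto.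
  - apply (f_equal phi) in H1. rewrite !phi_inv_r in H1. lra.
  - apply phi_increasing in H1. rewrite !phi_inv_r in H1. lra.
Qed.

Lemma inv_continuous y : continuity_pt (inv phi) y.
Proof.
  apply (Ranalysis5.continuity_pt_recip_prelim phi (inv phi) (inv phi y - 1) (inv phi y + 1)).
  - lra.
  - intros; apply phi_increasing; auto.
  - intros; unfold comp, id; apply phi_inv_l.
  - intros; apply phi_continuous.
  - split; [rewrite <- (phi_inv_r y) at 2 | rewrite <- (phi_inv_r y) at 1]; apply phi_increasing; lra.
Qed.

Lemma inv_derivable y : derivable_pt_lim (inv phi) y (/ deriv phi (inv phi y)).
Proof.
  assert (Prf: forall a, inv phi (y - 1) <= a <= inv phi (y + 1) -> derivable_pt phi a).
  { intros a _. exists (deriv phi a). apply smooth_derivable; auto. }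
  assert (Pi: inv phi (y - 1) <= inv phi y <= inv phi (y + 1)).
  { split; left; apply inv_increasing; lra. }
  pose proof (Ranalysis5.derivable_pt_lim_recip_interv phi (inv phi) (y - 1) (y + 1) y Prf
    (inv_continuous y) ltac:(lra) ltac:(lra) Pi) as D.
  rewrite (derive_pt_eq_0 _ _ _ _ (smooth_derivable phi phi_smooth (inv phi y))) in D.
  unfold Rdiv in D. rewrite Rmult_1_l in D. apply D.
  - intros; unfold comp, id; apply phi_inv_r.
  - apply Rgt_not_eq, phi_deriv_pos.
Qed.

Lemma deriv_comp_inv h : smooth h ->
  deriv (fun th => h (inv phi th)) = fun th => deriv h (inv phi th) * / deriv phi (inv phi th).
Proof.
  intro Hh. apply functional_extensionality. intro th. apply deriv_eq_lim.
  apply (derivable_pt_lim_comp' h (inv phi)); [apply inv_derivable | apply smooth_derivable; auto].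
Qed.

End Lift.

Lemma lift_0_1 phi : DiffS1_0 phi -> phi 0 = 0 /\ phi 1 = 1.
Proof.
  intros [_ [Hp [_ H0]]]. split; auto. rewrite <- (Rplus_0_l 1), Hp, H0. ring.
Qed.

Lemma RInt_change_of_variable_lift phi Q : DiffS1_0 phi -> (forall y, continuity_pt Q y) ->
  RInt (fun x => deriv phi x * Q (phi x)) 0 1 = RInt Q 0 1.
Proof.
  intros Hphi HQ. destruct (lift_0_1 phi Hphi) as [E0 E1]. destruct Hphi as [Hs _].
  pose proof (@RInt_comp R_CompleteNormedModule Q phi (deriv phi) 0 1) as C.
  rewrite E0, E1 in C. rewrite <- C.
  - apply RInt_ext. intros; reflexivity.
  - intros; apply continuity_pt_continuous; auto.
  - intros; split.
    + apply is_derive_Reals, smooth_derivable; auto.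
    + apply continuity_pt_continuous, smooth_continuous, smooth_deriv; auto.
Qed.

(** * Part (1): Phi is an isometry *)

Lemma deriv_plus_scal phi h e x : smooth phi -> smooth h ->
  deriv (fun y => phi y + e * h y) x = deriv phi x + e * deriv h x.
Proof.
  intros H1 H2. apply deriv_eq_lim.
  apply derivable_pt_lim_val with (deriv phi x + (0 * h x + e * deriv h x)); [ring|].
  apply derivable_pt_lim_plus'; [apply smooth_derivable; auto|].
  apply (derivable_pt_lim_mult' (fun _ => e) h); [apply derivable_pt_lim_const | apply smooth_derivable; auto].
Qed.

(* [rpow] agrees with [Rpower] near e = 0 since a + e b > 0 there. *)
Lemma derivable_pt_lim_root_line q a b : 0 < q -> 0 < a ->
  derivable_pt_lim (fun e => q * rpow (a + e * b) (/ q)) 0 (Rpower a (/ q - 1) * b).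
Proof.
  intros Hq Ha. apply is_derive_Reals.
  apply (is_derive_ext_loc (fun e => q * Rpower (a + e * b) (/ q))).
  - assert (Hpos: 0 < a / (Rabs b + 1)) by (apply Rdiv_lt_0_compat; [| pose proof (Rabs_pos b)]; lra).
    exists (mkposreal _ Hpos). intros e He%ball_R. simpl in He. rewrite Rminus_0_r in He.
    assert (Rabs (e * b) < a).
    { rewrite Rabs_mult. pose proof (Rabs_pos b). pose proof (Rabs_pos e).
      apply Rle_lt_trans with (Rabs e * (Rabs b + 1)); [nra|].
      apply Rmult_lt_reg_r with (/ (Rabs b + 1)); [apply Rinv_0_lt_compat; lra|].
      rewrite Rmult_assoc, Rinv_r, Rmult_1_r by lra. auto. }
    apply Rabs_def2 in H. rewrite rpow_Rpower; auto. lra.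
  - apply is_derive_Reals.
    apply derivable_pt_lim_val with (0 * Rpower (a + 0 * b) (/ q)
        + q * ((/ q * Rpower (a + 0 * b) (/ q - 1)) * (0 + (1 * b + 0 * 0)))).
    { rewrite !Rmult_0_l, !Rplus_0_r, Rplus_0_l. field. lra. }
    apply (derivable_pt_lim_mult' (fun _ => q) (fun e => Rpower (a + e * b) (/ q)));
      [apply derivable_pt_lim_const|].
    apply (derivable_pt_lim_comp' (fun z => Rpower z (/ q)) (fun e => a + e * b)).
    + apply derivable_pt_lim_plus'; [apply derivable_pt_lim_const|].
      apply (derivable_pt_lim_mult' (fun e => e) (fun _ => b));
        [apply derivable_pt_lim_id | apply derivable_pt_lim_const].
    + apply derivable_pt_lim_power. rewrite Rmult_0_l, Rplus_0_r. auto.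
Qed.

Lemma rpow_abs_Rpower_mult a b q : 0 < a -> 0 < q ->
  rpow (Rabs (Rpower a (/ q - 1) * b)) q = a * rpow (Rabs (b * / a)) q.
Proof.
  intros Ha Hq. destruct (Req_dec b 0) as [->|Hb].
  - rewrite Rmult_0_r, Rmult_0_l, Rabs_R0, rpow_nonpos by lra. ring.
  - assert (Hb': 0 < Rabs b) by (apply Rabs_pos_lt; auto).
    assert (Hia: 0 < / a) by (apply Rinv_0_lt_compat; auto).
    rewrite !Rabs_mult, (Rabs_pos_eq (Rpower _ _)), (Rabs_pos_eq (/ a)) by (left; auto using Rpower_gt_0).
    rewrite !rpow_Rpower by (apply Rmult_lt_0_compat; auto using Rpower_gt_0).
    unfold Rpower. rewrite !ln_mult, ln_exp, ln_Rinv by auto using exp_pos.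
    rewrite <- (exp_ln a) at 2 by auto. rewrite <- exp_plus. f_equal. field. lra.
Qed.

Lemma Phi_isometry q phi h : 1 <= q -> DiffS1_0 phi -> tangent h ->
  (forall x, exists l, derivable_pt_lim (fun e => Phi q (fun y => phi y + e * h y) x) 0 l) /\
  Lqnorm q (dPhi q phi h) = Fmetric q phi h.
Proof.
  intros Hq Hphi [[Hhs _] _]. pose proof Hphi as [Hs [Hp [Hd H0]]].
  set (a := deriv phi). set (b := deriv h).
  assert (Hder: forall x, derivable_pt_lim (fun e => Phi q (fun y => phi y + e * h y) x) 0
                                           (Rpower (a x) (/ q - 1) * b x)).
  { intro x. apply derivable_pt_lim_ext with (fun e => q * rpow (a x + e * b x) (/ q)).
    - intro e. unfold Phi. rewrite deriv_plus_scal; auto.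
    - apply derivable_pt_lim_root_line; auto; lra. }
  split; [intro x; eexists; apply Hder|].
  assert (Ha: forall x, continuity_pt a x) by (apply smooth_continuous, smooth_deriv; auto).
  assert (Hb: forall x, continuity_pt b x) by (apply smooth_continuous, smooth_deriv; auto).
  set (Q := fun th => rpow (Rabs (b (inv phi th) * / a (inv phi th))) q).
  assert (HQ: forall th, continuity_pt Q th).
  { intro th. apply continuity_pt_rpow; [lra|]. apply continuity_pt_abs, continuity_pt_mult'.
    - apply continuity_pt_comp'; auto using inv_continuous.
    - apply continuity_pt_inv'; [apply continuity_pt_comp'; auto using inv_continuous |].
      apply Rgt_not_eq, Hd. }
  assert (EdPhi: dPhi q phi h = fun x => Rpower (a x) (/ q - 1) * b x).
  { apply functional_extensionality. intro x. apply deriv_eq_lim, Hder. }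
  assert (EPhi: forall x, rpow (Rabs (Rpower (a x) (/ q - 1) * b x)) q = a x * Q (phi x)).
  { intro x. unfold Q. rewrite phi_inv_l; auto. apply rpow_abs_Rpower_mult; auto; lra. }
  unfold Fmetric, Lqnorm. rewrite EdPhi, deriv_comp_inv, (functional_extensionality _ _ EPhi); auto.
  f_equal. rewrite !integral01_RInt.
  - apply RInt_change_of_variable_lift; auto.
  - apply ex_RInt_of_continuity; auto.
  - apply ex_RInt_of_continuity. intro x.
    apply continuity_pt_mult'; auto. apply continuity_pt_comp'; auto using phi_continuous.
Qed.

(** * Part (2): the image of Phi *)

Definition density (q : R) (f : R -> R) := fun x => Rpower (/ q * f x) q.

Lemma rpow_abs_q_Rpower q c : 0 < q -> 0 < c -> rpow (Rabs (q * Rpower c (/ q))) q = Rpower q q * c.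
Proof.
  intros Hq Hc. pose proof (Rpower_gt_0 c (/ q)).
  rewrite Rabs_pos_eq, rpow_Rpower by (try apply Rmult_le_pos; try apply Rmult_lt_0_compat; lra).
  rewrite <- Rpower_mult_distr, Rpower_mult, Rinv_l, Rpower_1 by lra. auto.
Qed.

Lemma Uq_density q f : 1 <= q -> Uq q f ->
  smooth (density q f) /\ (forall x, 0 < density q f x) /\
  (forall x, density q f (x + 1) = density q f x) /\
  RInt (density q f) 0 1 = 1 /\ (forall x, f x = q * Rpower (density q f x) (/ q)).
Proof.
  intros Hq [[Hs Hper] [Hpos Hn]]. set (a := density q f).
  assert (Hf_a: forall x, f x = q * Rpower (a x) (/ q)).
  { intro x. unfold a, density.
    rewrite Rpower_mult, Rinv_r, Rpower_1 by (try apply Rmult_lt_0_compat; auto; try apply Rinv_0_lt_compat; lra).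
    field. lra. }
  assert (Ha_sm: smooth a).
  { apply smooth_Rpower; [apply smooth_scal; auto|].
    intro x. apply Rmult_lt_0_compat; auto. apply Rinv_0_lt_compat; lra. }
  repeat split; auto.
  - intro; apply Rpower_gt_0.
  - intro; unfold a, density; rewrite Hper; auto.
  - apply Lqnorm_eq_q_iff in Hn; [|lra].
    assert (E: forall x, rpow (Rabs (f x)) q = Rpower q q * a x).
    { intro x. rewrite Hf_a. apply rpow_abs_q_Rpower; [lra | apply Rpower_gt_0]. }
    rewrite (functional_extensionality _ _ E), integral01_RInt, RInt_scal_R in Hn
      by (apply smooth_ex_RInt; auto using smooth_scal).
    apply Rmult_eq_reg_l with (Rpower q q); [rewrite Hn; ring | apply Rgt_not_eq, Rpower_gt_0].
Qed.

Lemma Phi_in_Uq q phi f : 1 <= q -> DiffS1_0 phi -> (forall x, Phi q phi x = f x) -> Uq q f.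
Proof.
  intros Hq Hphi HF. pose proof Hphi as [Hs [Hp [Hd H0]]].
  assert (Ef: forall x, f x = q * Rpower (deriv phi x) (/ q)).
  { intro x. rewrite <- HF. unfold Phi. rewrite rpow_Rpower; auto. }
  split; [split|split].
  - apply smooth_ext with (fun x => q * Rpower (deriv phi x) (/ q)); [intro; rewrite Ef; auto|].
    apply smooth_scal, smooth_Rpower; auto. apply smooth_deriv; auto.
  - intro x. rewrite !Ef, deriv_lift_periodic; auto.
  - intro x. rewrite Ef. apply Rmult_lt_0_compat; [lra | apply Rpower_gt_0].
  - apply Lqnorm_eq_q_iff; [lra|].
    assert (E: forall x, rpow (Rabs (f x)) q = Rpower q q * deriv phi x).
    { intro x. rewrite Ef. apply rpow_abs_q_Rpower; auto; lra. }
    destruct (lift_0_1 phi Hphi) as [E0 E1].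
    rewrite (functional_extensionality _ _ E), integral01_RInt, RInt_scal_R, RInt_deriv_smooth, E0, E1
      by (first [assumption | apply smooth_ex_RInt; auto using smooth_scal, smooth_deriv]).
    ring.
Qed.

Lemma Uq_in_Phi_image q f : 1 <= q -> Uq q f ->
  exists phi, DiffS1_0 phi /\ forall x, Phi q phi x = f x.
Proof.
  intros Hq Hf. destruct (Uq_density q f Hq Hf) as [Hs [Hpos [Hper [Hint Ef]]]].
  set (a := density q f) in *.
  assert (Ha: forall x, continuity_pt a x) by (apply smooth_continuous; auto).
  set (phi := fun x => RInt a 0 x).
  assert (Hd: forall x, derivable_pt_lim phi x (a x)).
  { intro x. apply is_derive_Reals, is_derive_RInt_upper; auto. }
  assert (Ed: forall x, deriv phi x = a x) by (intro x; apply deriv_eq_lim, Hd).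
  exists phi. split; [split; [|split; [|split]]|].
  - apply smooth_iff_Dn. intro n. apply Dn_S. exists a. split; auto.
    apply smooth_iff_Dn; auto.
  - intro x. unfold phi.
    rewrite <- (RInt_Chasles_R a 0 x (x + 1)), RInt_period by (auto; apply ex_RInt_of_continuity; auto).
    lra.
  - intro x. rewrite Ed. auto.
  - apply (@RInt_point R_CompleteNormedModule).
  - intro x. unfold Phi. rewrite Ed, rpow_Rpower, Ef; auto.
Qed.

(** * Functions of two variables *)

Lemma cont2_continuity_2d H t x : cont2 H -> continuity_2d_pt H t x.
Proof.
  intros C eps. destruct (C t x eps (cond_pos eps)) as [d [Hd P]].
  exists (mkposreal d Hd). intros u v Hu Hv. apply P; auto.
Qed.

Lemma continuity_2d_cont2 H : (forall t x, continuity_2d_pt H t x) -> cont2 H.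
Proof.
  intros C t x eps He. destruct (C t x (mkposreal eps He)) as [d P].
  exists d. split; [apply cond_pos | intros; apply P; auto].
Qed.

Lemma cont2_swap H : cont2 H -> cont2 (fun x t => H t x).
Proof. intros C x t eps He. destruct (C t x eps He) as [d [Hd P]]. exists d; split; auto. Qed.

Lemma cont2_continuity_x H t x : cont2 H -> continuity_pt (fun y => H t y) x.
Proof.
  intros C. apply continuity_pt_locally. intro eps. destruct (C t x eps (cond_pos eps)) as [d [Hd P]].
  exists (mkposreal d Hd). intros y Hy. apply P; [rewrite Rminus_diag, Rabs_R0; auto | apply Hy].
Qed.
Lemma cont2_continuity_t H t x : cont2 H -> continuity_pt (fun s => H s x) t.
Proof. intros C. apply (cont2_continuity_x (fun x t => H t x)), cont2_swap; auto. Qed.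

Lemma cont2_comp (phi : R -> R) H : (forall t x, continuity_pt phi (H t x)) -> cont2 H ->
  cont2 (fun t x => phi (H t x)).
Proof.
  intros Hp C t x eps He.
  destruct (proj1 (continuity_pt_locally _ _) (Hp t x) (mkposreal eps He)) as [d1 P1].
  destruct (C t x d1 (cond_pos d1)) as [d [Hd P]].
  exists d; split; auto. intros s y Hs Hy. apply (P1 (H s y)), P; auto.
Qed.

Lemma cont2_plus F G : cont2 F -> cont2 G -> cont2 (fun t x => F t x + G t x).
Proof.
  intros. apply continuity_2d_cont2. intros. apply continuity_2d_pt_plus; apply cont2_continuity_2d; auto.
Qed.
Lemma cont2_mult F G : cont2 F -> cont2 G -> cont2 (fun t x => F t x * G t x).
Proof.
  intros. apply continuity_2d_cont2. intros. apply continuity_2d_pt_mult; apply cont2_continuity_2d; auto.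
Qed.

Lemma cont2_of_t v : (forall t, continuity_pt v t) -> cont2 (fun t x => v t).
Proof.
  intros Hv t x eps He.
  destruct (proj1 (continuity_pt_locally _ _) (Hv t) (mkposreal eps He)) as [d P].
  exists d. split; [apply cond_pos|]. intros s y Hs Hy. apply (P s), Hs.
Qed.
Lemma cont2_of_x v : (forall x, continuity_pt v x) -> cont2 (fun t x => v x).
Proof. intros Hv. apply (cont2_swap (fun x t => v x)), cont2_of_t; auto. Qed.

Lemma RInt_param_continuous_le H a b t0 : cont2 H -> a <= b ->
  continuity_pt (fun t => RInt (fun x => H t x) a b) t0.
Proof.
  intros C Hab. apply continuity_pt_locally. intro eps.
  assert (He: 0 < eps / (b - a + 1)) by (apply Rdiv_lt_0_compat; [apply cond_pos | lra]).
  destruct (uniform_continuity_2d H (t0 - 1) (t0 + 1) a b) with (eps := mkposreal _ He) as [d Hd].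
  { intros; apply cont2_continuity_2d; auto. }
  exists (mkposreal (Rmin d 1) ltac:(apply Rmin_pos; [apply cond_pos | lra])).
  intros u Hu%ball_R. simpl in Hu.
  assert (Hu1: Rabs (u - t0) < d) by (eapply Rlt_le_trans; [apply Hu | apply Rmin_l]).
  assert (Hu2: Rabs (u - t0) < 1) by (eapply Rlt_le_trans; [apply Hu | apply Rmin_r]).
  apply Rabs_def2 in Hu2.
  rewrite <- RInt_minus_R by (apply ex_RInt_of_continuity; intro; apply cont2_continuity_x; auto).
  apply Rle_lt_trans with ((b - a) * (eps / (b - a + 1))).
  - apply abs_RInt_le_const; auto.
    + apply ex_RInt_of_continuity; intro; apply continuity_pt_minus'; apply cont2_continuity_x; auto.
    + intros y Hy. left. apply (Hd t0 y u y); try lra. rewrite Rminus_diag, Rabs_R0; apply cond_pos.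
  - apply Rlt_le_trans with ((b - a + 1) * (eps / (b - a + 1))).
    + apply Rmult_lt_compat_r; auto; lra.
    + right; field; lra.
Qed.

Lemma RInt_param_continuous H a b t0 : cont2 H ->
  continuity_pt (fun t => RInt (fun x => H t x) a b) t0.
Proof.
  intros C. destruct (Rle_dec a b); [apply RInt_param_continuous_le; auto|].
  apply continuity_pt_ext with (fun t => - RInt (fun x => H t x) b a).
  { intro t. rewrite (@opp_RInt_swap R_CompleteNormedModule); auto.
    apply ex_RInt_of_continuity; intro; apply cont2_continuity_x; auto. }
  apply continuity_pt_opp, RInt_param_continuous_le; auto; lra.
Qed.

(* Fubini on the unit square: both sides are the value at tau = 1 of
   functions of tau with the same derivative, vanishing at tau = 0. *)
Lemma RInt_swap_01 H : cont2 H ->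
  RInt (fun x => RInt (fun t => H t x) 0 1) 0 1 = RInt (fun t => RInt (fun x => H t x) 0 1) 0 1.
Proof.
  intros C.
  set (f := fun tau x => RInt (fun t => H t x) 0 tau).
  set (A := fun tau => RInt (fun x => f tau x) 0 1).
  set (J := fun t => RInt (fun x => H t x) 0 1).
  assert (Jc: forall t, continuity_pt J t) by (intro; apply RInt_param_continuous; auto).
  assert (Hf: forall tau x, is_derive (fun u => f u x) tau (H tau x)).
  { intros tau x. apply (is_derive_RInt_upper (fun t => H t x)). intro; apply cont2_continuity_t; auto. }
  assert (HA: forall tau, is_derive A tau (J tau)).
  { intro tau. apply (is_derive_val _ _ (RInt (fun x => Derive (fun u => f u x) tau) 0 1)).
    { apply RInt_ext. intros. apply is_derive_unique, Hf. }
    apply (@is_derive_RInt_param f 0 1 tau).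
    - apply filter_forall. intros y t _. exists (H y t). apply Hf.
    - intros t _. apply continuity_2d_pt_ext with H.
      + intros u v. symmetry. apply is_derive_unique, Hf.
      + apply cont2_continuity_2d; auto.
    - apply filter_forall. intros y. apply ex_RInt_of_continuity. intro x.
      apply (RInt_param_continuous (fun x t => H t x)), cont2_swap; auto. }
  assert (A0: A 0 = 0).
  { unfold A, f. rewrite (RInt_ext_R _ (fun _ => 0)), RInt_const_R by
      (intro; apply (@RInt_point R_CompleteNormedModule)). lra. }
  pose proof (RInt_derivative A J 0 1 HA Jc) as E. rewrite A0, Rminus_0_r in E.
  unfold A, f in E. rewrite E. reflexivity.
Qed.

Fixpoint Cn2 (n : nat) (F : R -> R -> R) : Prop :=
  match n with
  | O => cont2 F
  | S m => cont2 F /\ exists Ft Fx,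
      (forall t x, derivable_pt_lim (fun s => F s x) t (Ft t x)) /\
      (forall t x, derivable_pt_lim (fun y => F t y) x (Fx t x)) /\ Cn2 m Ft /\ Cn2 m Fx
  end.

Lemma Cn2_cont2 n F : Cn2 n F -> cont2 F.
Proof. destruct n; simpl; tauto. Qed.

Lemma Cn2_S n : forall F, Cn2 (S n) F -> Cn2 n F.
Proof.
  induction n; simpl; [tauto|].
  intros F [C [Ft [Fx [H1 [H2 [H3 H4]]]]]]. split; auto. exists Ft, Fx. repeat split; auto.
Qed.

Lemma cont2_const c : cont2 (fun _ _ => c).
Proof. intros t x eps He. exists 1. split; [lra|]. intros. rewrite Rminus_diag, Rabs_R0; auto. Qed.

Lemma Cn2_const c n : Cn2 n (fun _ _ => c).
Proof.
  revert c; induction n; intro c; simpl; [apply cont2_const|].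
  split; [apply cont2_const|]. exists (fun _ _ => 0), (fun _ _ => 0).
  repeat split; auto; intros; apply derivable_pt_lim_const.
Qed.

Lemma Cn2_plus n : forall F G, Cn2 n F -> Cn2 n G -> Cn2 n (fun t x => F t x + G t x).
Proof.
  induction n; simpl; [apply cont2_plus|].
  intros F G [CF [Ft [Fx [H1 [H2 [H3 H4]]]]]] [CG [Gt [Gx [K1 [K2 [K3 K4]]]]]].
  split; [apply cont2_plus; auto|].
  exists (fun t x => Ft t x + Gt t x), (fun t x => Fx t x + Gx t x).
  repeat split; auto; intros; apply derivable_pt_lim_plus'; auto.
Qed.

Lemma Cn2_mult n : forall F G, Cn2 n F -> Cn2 n G -> Cn2 n (fun t x => F t x * G t x).
Proof.
  induction n; simpl; [apply cont2_mult|].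
  intros F G HF HG. pose proof (Cn2_S n F HF). pose proof (Cn2_S n G HG).
  destruct HF as [CF [Ft [Fx [H1 [H2 [H3 H4]]]]]], HG as [CG [Gt [Gx [K1 [K2 [K3 K4]]]]]].
  split; [apply cont2_mult; auto|].
  exists (fun t x => Ft t x * G t x + F t x * Gt t x), (fun t x => Fx t x * G t x + F t x * Gx t x).
  repeat split.
  - intros; apply (derivable_pt_lim_mult' (fun s => F s x) (fun s => G s x)); auto.
  - intros; apply (derivable_pt_lim_mult' (fun y => F t y) (fun y => G t y)); auto.
  - apply Cn2_plus; apply IHn; auto.
  - apply Cn2_plus; apply IHn; auto.
Qed.

Lemma Cn2_of_t n : forall v, smooth v -> Cn2 n (fun t x => v t).
Proof.
  induction n; intros v Hv; simpl; [apply cont2_of_t, smooth_continuous; auto|].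
  split; [apply cont2_of_t, smooth_continuous; auto|].
  exists (fun t x => deriv v t), (fun _ _ => 0). repeat split.
  - intros; apply smooth_derivable; auto.
  - intros; apply derivable_pt_lim_const.
  - apply (IHn (deriv v)), smooth_deriv; auto.
  - apply Cn2_const.
Qed.
Lemma Cn2_of_x n : forall v, smooth v -> Cn2 n (fun t x => v x).
Proof.
  induction n; intros v Hv; simpl; [apply cont2_of_x, smooth_continuous; auto|].
  split; [apply cont2_of_x, smooth_continuous; auto|].
  exists (fun _ _ => 0), (fun t x => deriv v x). repeat split.
  - intros; apply derivable_pt_lim_const.
  - intros; apply smooth_derivable; auto.
  - apply Cn2_const.
  - apply (IHn (deriv v)), smooth_deriv; auto.
Qed.

Lemma Dn_pos_continuous n phi y : Dn_pos (S n) phi -> 0 < y -> continuity_pt phi y.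
Proof.
  intros [f' [H _]] Hy. apply derivable_continuous_pt. exists (f' y). apply H; auto.
Qed.

Lemma Cn2_comp_pos n : forall phi F, Dn_pos (S n) phi -> Cn2 n F -> (forall t x, 0 < F t x) ->
  Cn2 n (fun t x => phi (F t x)).
Proof.
  induction n; intros phi F Hphi HF Hpos.
  - simpl. apply cont2_comp; auto. intros; apply (Dn_pos_continuous 0); auto.
  - assert (Hc: cont2 (fun t x => phi (F t x))).
    { apply cont2_comp; [intros; apply (Dn_pos_continuous (S n)); auto | apply (Cn2_cont2 (S n)); auto]. }
    pose proof (Cn2_S n F HF).
    destruct Hphi as [phi' [Hd Hphi']].
    destruct HF as [CF [Ft [Fx [H1 [H2 [H3 H4]]]]]].
    split; auto.
    exists (fun t x => phi' (F t x) * Ft t x), (fun t x => phi' (F t x) * Fx t x).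
    repeat split.
    + intros. apply (derivable_pt_lim_comp' phi (fun s => F s x)); auto.
    + intros. apply (derivable_pt_lim_comp' phi (fun y => F t y)); auto.
    + apply Cn2_mult; auto.
    + apply Cn2_mult; auto.
Qed.

Definition partial_t (F : R -> R -> R) := fun t x => deriv (fun s => F s x) t.
Definition partial_x (F : R -> R -> R) := fun t x => deriv (fun y => F t y) x.

Definition Cinf2 F := forall n, Cn2 n F.

Lemma Cinf2_cont2 F : Cinf2 F -> cont2 F.
Proof. intro H; apply (Cn2_cont2 0), H. Qed.

Lemma Cinf2_derivable_t F : Cinf2 F ->
  forall t x, derivable_pt_lim (fun s => F s x) t (partial_t F t x).
Proof.
  intros H t x. destruct (H 1%nat) as [_ [Ft [Fx [H1 _]]]].
  unfold partial_t. rewrite (deriv_eq_lim _ _ _ (H1 t x)); auto.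
Qed.
Lemma Cinf2_derivable_x F : Cinf2 F ->
  forall t x, derivable_pt_lim (fun y => F t y) x (partial_x F t x).
Proof.
  intros H t x. destruct (H 1%nat) as [_ [Ft [Fx [_ [H2 _]]]]].
  unfold partial_x. rewrite (deriv_eq_lim _ _ _ (H2 t x)); auto.
Qed.

Lemma Cinf2_partial_t F : Cinf2 F -> Cinf2 (partial_t F).
Proof.
  intros H n. destruct (H (S n)) as [_ [Ft [Fx [H1 [_ [H3 _]]]]]].
  replace (partial_t F) with Ft; auto.
  apply functional_extensionality; intro t; apply functional_extensionality; intro x.
  symmetry; apply deriv_eq_lim; auto.
Qed.
Lemma Cinf2_partial_x F : Cinf2 F -> Cinf2 (partial_x F).
Proof.
  intros H n. destruct (H (S n)) as [_ [Ft [Fx [_ [H2 [_ H4]]]]]].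
  replace (partial_x F) with Fx; auto.
  apply functional_extensionality; intro t; apply functional_extensionality; intro x.
  symmetry; apply deriv_eq_lim; auto.
Qed.

Lemma Derive_deriv f x l : derivable_pt_lim f x l -> Derive f x = deriv f x.
Proof. intro H. rewrite (deriv_eq_lim _ _ _ H). apply is_derive_unique, is_derive_Reals; auto. Qed.

Lemma Cinf2_partial_xt K : Cinf2 K -> partial_x (partial_t K) = partial_t (partial_x K).
Proof.
  intros HK.
  pose proof (Cinf2_derivable_t K HK) as Ht. pose proof (Cinf2_derivable_x K HK) as Hx.
  pose proof (Cinf2_derivable_x _ (Cinf2_partial_t K HK)) as Htx.
  pose proof (Cinf2_derivable_t _ (Cinf2_partial_x K HK)) as Hxt.
  assert (E1: forall z v, Derive (fun s => K s v) z = partial_t K z v) by (intros; eapply Derive_deriv, Ht).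
  assert (E2: forall z v, Derive (fun y => K z y) v = partial_x K z v) by (intros; eapply Derive_deriv, Hx).
  apply functional_extensionality; intro t; apply functional_extensionality; intro x.
  pose proof (Schwarz K t x) as S.
  rewrite (Derive_ext _ _ _ (fun z => E2 z x)), (Derive_ext _ _ _ (E1 t)) in S.
  rewrite (Derive_deriv _ _ _ (Hxt t x)), (Derive_deriv (partial_t K t) _ _ (Htx t x)) in S.
  symmetry. apply S.
  - exists (mkposreal 1 Rlt_0_1). intros u v _ _. repeat split.
    + exists (partial_t K u v); apply is_derive_Reals; auto.
    + exists (partial_x K u v); apply is_derive_Reals; auto.
    + apply (ex_derive_ext (fun z => partial_x K z v)); [intro; symmetry; auto|].
      exists (partial_t (partial_x K) u v); apply is_derive_Reals; auto.
    + apply (ex_derive_ext (fun z => partial_t K u z)); [intro; symmetry; auto|].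
      exists (partial_x (partial_t K) u v); apply is_derive_Reals; auto.
  - apply continuity_2d_pt_ext with (partial_t (partial_x K)).
    { intros u v. rewrite (Derive_ext _ _ _ (fun z => E2 z v)). symmetry; eapply Derive_deriv; eauto. }
    apply cont2_continuity_2d, Cinf2_cont2, Cinf2_partial_t, Cinf2_partial_x; auto.
  - apply continuity_2d_pt_ext with (partial_x (partial_t K)).
    { intros u v. rewrite (Derive_ext _ _ _ (E1 u)). symmetry; eapply Derive_deriv; eauto. }
    apply cont2_continuity_2d, Cinf2_cont2, Cinf2_partial_x, Cinf2_partial_t; auto.
Qed.

Lemma Cinf2_iter_partial_t i : forall F, Cinf2 F -> Cinf2 (Nat.iter i partial_t F).
Proof. induction i; simpl; auto. intros; apply Cinf2_partial_t; auto. Qed.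
Lemma Cinf2_iter_partial_x j : forall F, Cinf2 F -> Cinf2 (Nat.iter j partial_x F).
Proof. induction j; simpl; auto. intros; apply Cinf2_partial_x; auto. Qed.

Lemma partial_x_iter_t i : forall H, Cinf2 H ->
  partial_x (Nat.iter i partial_t H) = Nat.iter i partial_t (partial_x H).
Proof.
  induction i; simpl; auto. intros H HH.
  rewrite Cinf2_partial_xt by (apply Cinf2_iter_partial_t; auto). rewrite IHi; auto.
Qed.

Lemma Cinf2_smooth2 F : Cinf2 F -> smooth2 F.
Proof.
  intros HF. exists (fun i j => Nat.iter i partial_t (Nat.iter j partial_x F)).
  assert (HC: forall i j, Cinf2 (Nat.iter i partial_t (Nat.iter j partial_x F)))
    by (intros; apply Cinf2_iter_partial_t, Cinf2_iter_partial_x; auto).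
  split; [reflexivity|]. split; [|split].
  - intros i j t x. apply Cinf2_derivable_t, HC.
  - intros i j t x. simpl. rewrite <- partial_x_iter_t by (apply Cinf2_iter_partial_x; auto).
    apply Cinf2_derivable_x, HC.
  - intros i j. apply Cinf2_cont2, HC.
Qed.

(** * Lengths of paths dominate L^1 distances *)

Lemma Lqnorm_RInt q u : (forall x, continuity_pt u x) -> 0 < q ->
  Lqnorm q u = rpow (RInt (fun x => rpow (Rabs (u x)) q) 0 1) (/ q).
Proof.
  intros Hu Hq. unfold Lqnorm. rewrite integral01_RInt; auto.
  apply ex_RInt_of_continuity. intro; apply continuity_pt_rpow, continuity_pt_abs; auto.
Qed.

Lemma Lqnorm_ge_0 q u : 0 <= Lqnorm q u.
Proof. apply rpow_ge_0. Qed.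

(* Jensen's inequality, via the tangent line of y^q at the mean of |u|. *)
Lemma L1_le_Lqnorm u q : 1 <= q -> (forall x, continuity_pt u x) ->
  RInt (fun x => Rabs (u x)) 0 1 <= Lqnorm q u.
Proof.
  intros Hq Hc. rewrite Lqnorm_RInt by (auto; lra).
  set (A := RInt (fun x => Rabs (u x)) 0 1).
  assert (Ex1: ex_RInt (fun x => Rabs (u x)) 0 1) by (apply ex_RInt_of_continuity; intro; apply continuity_pt_abs; auto).
  assert (Ex2: ex_RInt (fun x => rpow (Rabs (u x)) q) 0 1).
  { apply ex_RInt_of_continuity; intro; apply continuity_pt_rpow; [lra|]. apply continuity_pt_abs; auto. }
  assert (HA: 0 <= A) by (apply RInt_ge_0; auto; [lra | intros; apply Rabs_pos]).
  destruct HA as [HA|HA]; [| rewrite <- HA; apply rpow_ge_0].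
  assert (I: Rpower A q <= RInt (fun x => rpow (Rabs (u x)) q) 0 1).
  { apply Rle_trans with (RInt (fun x => Rpower A q + q * Rpower A (q - 1) * (Rabs (u x) - A)) 0 1).
    - rewrite RInt_affine; auto. fold A. lra.
    - apply RInt_le; auto; [lra| |].
      + apply ex_RInt_of_continuity. intro.
        apply continuity_pt_plus', continuity_pt_mult'; try apply continuity_pt_const'.
        apply continuity_pt_minus'; [apply continuity_pt_abs; auto | apply continuity_pt_const'].
      + intros. apply Rpower_tangent_le; auto. apply Rabs_pos. }
  apply Rle_trans with (rpow (Rpower A q) (/ q)).
  - rewrite rpow_Rpower, Rpower_Rpower_inv by (auto using Rpower_gt_0; lra). lra.
  - apply rpow_le_compat; auto. apply Rinv_0_lt_compat; lra.
Qed.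

Lemma Lqnorm_param_continuous q D t : 0 < q -> cont2 D ->
  continuity_pt (fun s => Lqnorm q (D s)) t.
Proof.
  intros Hq C.
  apply continuity_pt_ext with (fun s => rpow (RInt (fun x => rpow (Rabs (D s x)) q) 0 1) (/ q)).
  { intro s. rewrite Lqnorm_RInt; auto. intro; apply cont2_continuity_x; auto. }
  apply continuity_pt_rpow; [apply Rinv_0_lt_compat; auto|].
  apply (RInt_param_continuous (fun s x => rpow (Rabs (D s x)) q)).
  apply (cont2_comp (fun y => rpow (Rabs y) q)); auto.
  intros; apply continuity_pt_rpow, continuity_pt_abs, continuity_pt_id; auto.
Qed.

Lemma smooth2_partial_t F : smooth2 F ->
  exists D, cont2 D /\ forall t x, derivable_pt_lim (fun s => F s x) t (D t x).
Proof. intros [G [HG0 [Ht [Hx Hc]]]]. subst F. exists (G 1%nat 0%nat). auto. Qed.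

Lemma path_length_bounds q f g F : 1 <= q -> smooth2 F ->
  (forall x, F 0 x = f x) -> (forall x, F 1 x = g x) ->
  0 <= path_length q F /\ RInt (fun x => Rabs (g x - f x)) 0 1 <= path_length q F.
Proof.
  intros Hq HF HF0 HF1.
  destruct (smooth2_partial_t F HF) as [D [CD HD]].
  assert (ED: forall t, (fun x => deriv (fun s => F s x) t) = D t).
  { intro t. apply functional_extensionality. intro x. apply deriv_eq_lim, HD. }
  assert (Lc: forall t, continuity_pt (fun s => Lqnorm q (D s)) t)
    by (intro; apply Lqnorm_param_continuous; auto; lra).
  assert (EL: path_length q F = RInt (fun t => Lqnorm q (D t)) 0 1).
  { unfold path_length.
    replace (fun t => Lqnorm q (fun x => deriv (fun s => F s x) t)) with (fun t => Lqnorm q (D t))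
      by (apply functional_extensionality; intro t; rewrite ED; auto).
    apply integral01_RInt, ex_RInt_of_continuity; auto. }
  assert (ADc: cont2 (fun t x => Rabs (D t x))) by (apply (cont2_comp Rabs); auto; intros; apply Rcontinuity_abs).
  assert (Egf: forall x, g x - f x = RInt (fun t => D t x) 0 1).
  { intro x. rewrite <- HF0, <- HF1. symmetry. apply (RInt_derivative (fun s => F s x)).
    - intro; apply is_derive_Reals, HD.
    - intro; apply cont2_continuity_t; auto. }
  rewrite EL. split.
  { apply RInt_ge_0; [lra | apply ex_RInt_of_continuity; auto | intros; apply Lqnorm_ge_0]. }
  apply Rle_trans with (RInt (fun x => RInt (fun t => Rabs (D t x)) 0 1) 0 1).
  { apply RInt_le; [lra | | |].
    - apply ex_RInt_of_continuity. intro x.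
      apply continuity_pt_ext with (fun x => Rabs (RInt (fun t => D t x) 0 1)); [intro; rewrite Egf; auto|].
      apply continuity_pt_abs, (RInt_param_continuous (fun x t => D t x)), cont2_swap; auto.
    - apply ex_RInt_of_continuity. intro x.
      apply (RInt_param_continuous (fun x t => Rabs (D t x))), cont2_swap; auto.
    - intros x _. rewrite Egf. apply abs_RInt_le; [lra|].
      apply ex_RInt_of_continuity. intro; apply cont2_continuity_t; auto. }
  rewrite RInt_swap_01 by auto.
  apply RInt_le; [lra | | apply ex_RInt_of_continuity; auto |].
  - apply ex_RInt_of_continuity. intro; apply RInt_param_continuous; auto.
  - intros t _. apply L1_le_Lqnorm; auto. intro; apply cont2_continuity_x; auto.
Qed.

(** * Intrinsic distances are at most 2q *)

Definition ease t := (1 - cos (PI * t)) / 2.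
Definition ease_deriv t := PI / 2 * sin (PI * t).

Lemma ease_range t : 0 <= ease t <= 1.
Proof. unfold ease. pose proof (COS_bound (PI * t)). lra. Qed.

Lemma ease_open t : 0 < t < 1 -> 0 < ease t < 1.
Proof.
  intro Ht. pose proof PI_RGT_0. unfold ease.
  assert (cos (PI * t) < cos 0) by (apply cos_decreasing_1; nra).
  assert (cos PI < cos (PI * t)) by (apply cos_decreasing_1; nra).
  rewrite cos_0, cos_PI in *. lra.
Qed.

Lemma ease_0 : ease 0 = 0.
Proof. unfold ease. rewrite Rmult_0_r, cos_0. lra. Qed.
Lemma ease_1 : ease 1 = 1.
Proof. unfold ease. rewrite Rmult_1_r, cos_PI. lra. Qed.

Lemma ease_derivable t : derivable_pt_lim ease t (ease_deriv t).
Proof.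
  unfold ease, ease_deriv.
  apply derivable_pt_lim_val with
    ((0 - (- sin (PI * t)) * (0 * t + PI * 1)) * / 2 + (1 - cos (PI * t)) * 0); [field|].
  apply (derivable_pt_lim_mult' (fun t => 1 - cos (PI * t)) (fun _ => / 2)); [|apply derivable_pt_lim_const].
  apply derivable_pt_lim_minus; [apply derivable_pt_lim_const|].
  apply (derivable_pt_lim_comp' cos (fun t => PI * t)); [|apply derivable_pt_lim_cos].
  apply (derivable_pt_lim_mult' (fun _ => PI) (fun t => t));
    [apply derivable_pt_lim_const | apply derivable_pt_lim_id].
Qed.

Lemma smooth_ease : smooth ease.
Proof.
  apply smooth_ext with (fun t => / 2 * (1 - cos (PI * t))); [intro; unfold ease; field|].
  apply smooth_scal, smooth_minus; [apply smooth_const|].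
  apply (smooth_comp cos (fun t => PI * t)); [apply smooth_cos | apply smooth_scal, smooth_id].
Qed.

Lemma ease_deriv_nonneg t : 0 <= t <= 1 -> 0 <= ease_deriv t.
Proof. intro. pose proof PI_RGT_0. unfold ease_deriv. apply Rmult_le_pos; [lra | apply sin_ge_0; nra]. Qed.

Lemma ease_deriv_continuous t : continuity_pt ease_deriv t.
Proof.
  apply continuity_pt_mult'; [apply continuity_pt_const'|].
  apply (continuity_pt_comp' sin (fun t => PI * t)); [|apply continuity_sin].
  apply continuity_pt_mult'; [apply continuity_pt_const' | apply continuity_pt_id].
Qed.

Lemma rpow_mul_Rpower_le q c B d m : 1 <= q -> 0 < c -> 0 < B -> 0 <= d <= B -> c * B <= m ->
  rpow d q * Rpower m (1 - q) <= Rpower c (1 - q) * B.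
Proof.
  intros Hq Hc HB Hd Hm.
  assert (E1: rpow d q <= Rpower B q) by (rewrite <- (rpow_Rpower B) by auto; apply rpow_le_compat; lra).
  assert (E2: Rpower m (1 - q) <= Rpower (c * B) (1 - q)).
  { apply Rpower_le_nonpos_exp; [lra | split; [apply Rmult_lt_0_compat |]; lra]. }
  assert (E3: Rpower B q * Rpower (c * B) (1 - q) = Rpower c (1 - q) * B).
  { rewrite <- Rpower_mult_distr by lra.
    replace (Rpower B q * (Rpower c (1 - q) * Rpower B (1 - q)))
      with (Rpower c (1 - q) * (Rpower B q * Rpower B (1 - q))) by ring.
    rewrite <- Rpower_plus. replace (q + (1 - q)) with 1 by ring. rewrite Rpower_1; auto. }
  rewrite <- E3. apply Rmult_le_compat; auto using rpow_ge_0; left; apply Rpower_gt_0.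
Qed.

(* With m = a + s (b - a): m >= s b and m >= (1 - s) a. *)
Lemma speed_integrand_bound a b s q : 1 <= q -> 0 < a -> 0 < b -> 0 < s < 1 ->
  rpow (Rabs (b - a)) q * Rpower (a + s * (b - a)) (1 - q)
  <= Rpower s (1 - q) * b + Rpower (1 - s) (1 - q) * a.
Proof.
  intros Hq Ha Hb Hs.
  pose proof (Rpower_gt_0 s (1 - q)). pose proof (Rpower_gt_0 (1 - s) (1 - q)).
  destruct (Rle_dec a b).
  - assert (rpow (Rabs (b - a)) q * Rpower (a + s * (b - a)) (1 - q) <= Rpower s (1 - q) * b).
    { apply rpow_mul_Rpower_le; try lra. rewrite Rabs_pos_eq; lra. nra. }
    assert (0 <= Rpower (1 - s) (1 - q) * a) by (apply Rmult_le_pos; lra). lra.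
  - assert (rpow (Rabs (b - a)) q * Rpower (a + s * (b - a)) (1 - q) <= Rpower (1 - s) (1 - q) * a).
    { apply rpow_mul_Rpower_le; try lra. rewrite Rabs_left; lra. nra. }
    assert (0 <= Rpower s (1 - q) * b) by (apply Rmult_le_pos; lra). lra.
Qed.

Lemma RInt_interp (u v : R -> R) c : ex_RInt u 0 1 -> ex_RInt v 0 1 ->
  RInt (fun x => u x + c * (v x - u x)) 0 1 = RInt u 0 1 + c * (RInt v 0 1 - RInt u 0 1).
Proof.
  intros Hu Hv. assert (ex_RInt (fun x => v x - u x) 0 1) by (apply (@ex_RInt_minus R_CompleteNormedModule); auto).
  rewrite RInt_plus_R, RInt_scal_R, RInt_minus_R; auto.
  apply (@ex_RInt_scal R_CompleteNormedModule); auto.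
Qed.

Section Connecting_path.
Variables (q : R) (a b : R -> R).
Hypothesis Hq : 1 <= q.
Hypothesis a_smooth : smooth a.
Hypothesis b_smooth : smooth b.
Hypothesis a_pos : forall x, 0 < a x.
Hypothesis b_pos : forall x, 0 < b x.
Hypothesis a_periodic : forall x, a (x + 1) = a x.
Hypothesis b_periodic : forall x, b (x + 1) = b x.
Hypothesis a_int : RInt a 0 1 = 1.
Hypothesis b_int : RInt b 0 1 = 1.

Definition mix t x := a x + ease t * (b x - a x).
Definition Upath t x := q * Rpower (mix t x) (/ q).
Definition speed_integrand t x := rpow (Rabs (b x - a x)) q * Rpower (mix t x) (1 - q).
Definition speed_integral t := RInt (fun x => speed_integrand t x) 0 1.
Definition speed t := ease_deriv t * rpow (speed_integral t) (/ q).
Definition speed_majorant t :=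
  ease_deriv t * (Rpower (ease t) (/ q - 1) + Rpower (1 - ease t) (/ q - 1)).
Definition speed_primitive t := q * Rpower (ease t) (/ q) - q * Rpower (1 - ease t) (/ q).

Lemma mix_pos t x : 0 < mix t x.
Proof.
  pose proof (ease_range t). pose proof (a_pos x). pose proof (b_pos x). unfold mix.
  replace (a x + ease t * (b x - a x)) with ((1 - ease t) * a x + ease t * b x) by ring.
  destruct (Req_dec (ease t) 1) as [->|E]; [lra|].
  assert (0 < (1 - ease t) * a x) by (apply Rmult_lt_0_compat; lra).
  assert (0 <= ease t * b x) by (apply Rmult_le_pos; lra). lra.
Qed.

Lemma mix_Cn2 n : Cn2 n mix.
Proof.
  apply (Cn2_plus n (fun t x => a x) (fun t x => ease t * (b x - a x))); [apply Cn2_of_x; auto|].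
  apply (Cn2_mult n (fun t x => ease t) (fun t x => b x - a x)); [apply Cn2_of_t, smooth_ease|].
  apply (Cn2_of_x n (fun x => b x - a x)), smooth_minus; auto.
Qed.

Lemma Upath_Cinf2 : Cinf2 Upath.
Proof.
  intro n. apply (Cn2_mult n (fun _ _ => q) (fun t x => Rpower (mix t x) (/ q))); [apply Cn2_const|].
  apply (Cn2_comp_pos n (fun z => Rpower z (/ q)) mix); auto using Dn_pos_Rpower, mix_Cn2, mix_pos.
Qed.

Lemma Upath_Uq t : Uq q (Upath t).
Proof.
  assert (SM: smooth (mix t)) by (apply smooth_plus, smooth_scal, smooth_minus; auto).
  split; [split|split].
  - apply smooth_scal, smooth_Rpower; auto. intro; apply mix_pos.
  - intro x. unfold Upath, mix. rewrite a_periodic, b_periodic. auto.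
  - intro x. apply Rmult_lt_0_compat; [lra | apply Rpower_gt_0].
  - apply Lqnorm_eq_q_iff; [lra|].
    assert (E: forall x, rpow (Rabs (Upath t x)) q = Rpower q q * mix t x).
    { intro x. apply rpow_abs_q_Rpower; [lra | apply mix_pos]. }
    rewrite (functional_extensionality _ _ E), integral01_RInt, RInt_scal_R
      by (apply smooth_ex_RInt; auto using smooth_scal).
    unfold mix. rewrite RInt_interp, a_int, b_int by (apply smooth_ex_RInt; auto). ring.
Qed.

Lemma Upath_0 x : Upath 0 x = q * Rpower (a x) (/ q).
Proof. unfold Upath, mix. rewrite ease_0. do 3 f_equal. ring. Qed.
Lemma Upath_1 x : Upath 1 x = q * Rpower (b x) (/ q).
Proof. unfold Upath, mix. rewrite ease_1. do 3 f_equal. ring. Qed.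

Lemma Upath_derivable_t t x : derivable_pt_lim (fun s => Upath s x) t
  (Rpower (mix t x) (/ q - 1) * (ease_deriv t * (b x - a x))).
Proof.
  apply derivable_pt_lim_val with (0 * Rpower (mix t x) (/ q)
      + q * ((/ q * Rpower (mix t x) (/ q - 1)) * (0 + (ease_deriv t * (b x - a x) + ease t * 0)))).
  { field. lra. }
  apply (derivable_pt_lim_mult' (fun _ => q) (fun s => Rpower (mix s x) (/ q))); [apply derivable_pt_lim_const|].
  apply (derivable_pt_lim_comp' (fun z => Rpower z (/ q)) (fun s => mix s x)).
  - apply derivable_pt_lim_plus'; [apply derivable_pt_lim_const|].
    apply (derivable_pt_lim_mult' ease (fun _ => b x - a x)); [apply ease_derivable | apply derivable_pt_lim_const].
  - apply derivable_pt_lim_power, mix_pos.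
Qed.

Lemma speed_integrand_cont2 : cont2 speed_integrand.
Proof.
  apply cont2_mult.
  - apply (cont2_of_x (fun x => rpow (Rabs (b x - a x)) q)). intro.
    apply continuity_pt_rpow; [lra|]. apply continuity_pt_abs, continuity_pt_minus'; apply smooth_continuous; auto.
  - apply (Cn2_cont2 0), (Cn2_comp_pos 0 (fun z => Rpower z (1 - q)) mix);
      auto using Dn_pos_Rpower, mix_Cn2, mix_pos.
Qed.

Lemma ex_RInt_speed_integrand t u v : ex_RInt (speed_integrand t) u v.
Proof. apply ex_RInt_of_continuity. intro. apply cont2_continuity_x, speed_integrand_cont2. Qed.

Lemma speed_integral_nonneg t : 0 <= speed_integral t.
Proof.
  apply RInt_ge_0; [lra | apply ex_RInt_speed_integrand|].
  intros. apply Rmult_le_pos; [apply rpow_ge_0 | left; apply Rpower_gt_0].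
Qed.

Lemma speed_continuous t : continuity_pt speed t.
Proof.
  apply continuity_pt_mult'; [apply ease_deriv_continuous|].
  apply continuity_pt_rpow; [apply Rinv_0_lt_compat; lra|].
  apply RInt_param_continuous, speed_integrand_cont2.
Qed.

Lemma Lqnorm_Upath_deriv t : 0 <= t <= 1 -> Lqnorm q (fun x => deriv (fun s => Upath s x) t) = speed t.
Proof.
  intro Ht. pose proof (ease_deriv_nonneg t Ht) as Hsd.
  assert (E: forall x, rpow (Rabs (deriv (fun s => Upath s x) t)) q =
                       rpow (ease_deriv t) q * speed_integrand t x).
  { intro x. unfold speed_integrand. rewrite (deriv_eq_lim _ _ _ (Upath_derivable_t t x)).
    rewrite !Rabs_mult, (Rabs_pos_eq (Rpower _ _)), (Rabs_pos_eq (ease_deriv t))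
      by (auto; left; apply Rpower_gt_0).
    assert (Hm: 0 < Rpower (mix t x) (/ q - 1)) by apply Rpower_gt_0.
    pose proof (Rabs_pos (b x - a x)).
    rewrite !rpow_mult_distr by (try apply Rmult_le_pos; lra).
    rewrite rpow_mult_distr by lra.
    rewrite rpow_Rpower, Rpower_mult by apply Rpower_gt_0.
    replace ((/ q - 1) * q) with (1 - q) by (field; lra). ring. }
  assert (Ci: forall x, continuity_pt (speed_integrand t) x)
    by (intro; apply cont2_continuity_x, speed_integrand_cont2).
  unfold Lqnorm. rewrite (functional_extensionality _ _ E), integral01_RInt, RInt_scal_R
    by (apply ex_RInt_of_continuity; intro; auto using continuity_pt_mult', continuity_pt_const').
  fold (speed_integral t).
  rewrite rpow_mult_distr
    by (first [apply Rinv_0_lt_compat; lra | apply rpow_ge_0 | apply speed_integral_nonneg]).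
  unfold speed. f_equal. destruct Hsd as [Hsd|<-].
  - apply rpow_rpow_inv; auto. lra.
  - rewrite (rpow_nonpos 0) by lra. apply rpow_nonpos; lra.
Qed.

Lemma path_length_Upath : path_length q Upath = RInt speed 0 1.
Proof.
  assert (E: forall t, 0 <= t <= 1 -> Lqnorm q (fun x => deriv (fun s => Upath s x) t) = speed t)
    by exact Lqnorm_Upath_deriv.
  unfold path_length. rewrite integral01_RInt.
  - apply RInt_ext. intros t Ht. rewrite Rmin_left, Rmax_right in Ht by lra. apply E. lra.
  - apply ex_RInt_ext with speed; [|apply ex_RInt_of_continuity, speed_continuous].
    intros t Ht. rewrite Rmin_left, Rmax_right in Ht by lra. symmetry; apply E. lra.
Qed.

Lemma speed_integral_bound t : 0 < t < 1 ->
  speed_integral t <= Rpower (ease t) (1 - q) + Rpower (1 - ease t) (1 - q).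
Proof.
  intro Ht. pose proof (ease_open t Ht) as Hs.
  set (c1 := Rpower (ease t) (1 - q)). set (c2 := Rpower (1 - ease t) (1 - q)).
  assert (Ea: ex_RInt (fun x => c2 * a x) 0 1) by (apply smooth_ex_RInt, smooth_scal; auto).
  assert (Eb: ex_RInt (fun x => c1 * b x) 0 1) by (apply smooth_ex_RInt, smooth_scal; auto).
  apply Rle_trans with (RInt (fun x => c1 * b x + c2 * a x) 0 1).
  - apply RInt_le; [lra | apply ex_RInt_speed_integrand | |].
    + apply (@ex_RInt_plus R_CompleteNormedModule); auto.
    + intros x _. apply speed_integrand_bound; auto.
  - rewrite RInt_plus_R, !RInt_scal_R, a_int, b_int by (auto; apply smooth_ex_RInt; auto). lra.
Qed.

(* Subadditivity of y |-> y^(1/q) splits the bound of [speed_integral_bound]. *)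
Lemma speed_le_majorant t : 0 < t < 1 -> speed t <= speed_majorant t.
Proof.
  intro Ht. pose proof (ease_open t Ht) as Hs.
  apply Rmult_le_compat_l; [apply ease_deriv_nonneg; lra|].
  assert (Hr: 0 < / q <= 1).
  { split; [apply Rinv_0_lt_compat; lra | rewrite <- Rinv_1; apply Rinv_le_contravar; lra]. }
  apply Rle_trans with (rpow (Rpower (ease t) (1 - q) + Rpower (1 - ease t) (1 - q)) (/ q)).
  { apply rpow_le_compat; [lra | apply speed_integral_bound; auto]. }
  eapply Rle_trans; [apply rpow_subadditive; auto; left; apply Rpower_gt_0|].
  rewrite !rpow_Rpower, !Rpower_mult by apply Rpower_gt_0.
  replace ((1 - q) * / q) with (/ q - 1) by (field; lra). lra.
Qed.

Lemma derivable_pt_lim_q_root f x l : 0 < f x -> derivable_pt_lim f x l ->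
  derivable_pt_lim (fun t => q * Rpower (f t) (/ q)) x (Rpower (f x) (/ q - 1) * l).
Proof.
  intros Hf Hl.
  apply derivable_pt_lim_val with (0 * Rpower (f x) (/ q) + q * (/ q * Rpower (f x) (/ q - 1) * l)).
  { field. lra. }
  apply (derivable_pt_lim_mult' (fun _ => q) (fun t => Rpower (f t) (/ q))); [apply derivable_pt_lim_const|].
  apply (derivable_pt_lim_comp' (fun z => Rpower z (/ q)) f); auto.
  apply derivable_pt_lim_power; auto.
Qed.

Lemma speed_primitive_derive t : 0 < t < 1 -> is_derive speed_primitive t (speed_majorant t).
Proof.
  intro Ht. pose proof (ease_open t Ht) as Hs. apply is_derive_Reals.
  apply derivable_pt_lim_val with
    (Rpower (ease t) (/ q - 1) * ease_deriv t - Rpower (1 - ease t) (/ q - 1) * (0 - ease_deriv t)).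
  { unfold speed_majorant. ring. }
  apply (derivable_pt_lim_minus (fun t => q * Rpower (ease t) (/ q))
                                (fun t => q * Rpower (1 - ease t) (/ q))).
  - apply (derivable_pt_lim_q_root ease); [lra | apply ease_derivable].
  - apply (derivable_pt_lim_q_root (fun t => 1 - ease t)); [lra|].
    apply derivable_pt_lim_minus; [apply derivable_pt_lim_const | apply ease_derivable].
Qed.

Lemma speed_majorant_continuous t : 0 < t < 1 -> continuity_pt speed_majorant t.
Proof.
  intro Ht. pose proof (ease_open t Ht) as Hs.
  assert (Ce: continuity_pt ease t) by apply smooth_continuous, smooth_ease.
  apply continuity_pt_mult'; [apply ease_deriv_continuous|].
  apply continuity_pt_plus'.
  - apply (continuity_pt_comp' (fun z => Rpower z (/ q - 1)) ease); auto.
    apply continuity_pt_Rpower; lra.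
  - apply (continuity_pt_comp' (fun z => Rpower z (/ q - 1)) (fun t => 1 - ease t)).
    + apply continuity_pt_minus'; auto using continuity_pt_const'.
    + apply continuity_pt_Rpower; lra.
Qed.

Lemma RInt_speed_inner e : 0 < e < 1/2 -> RInt speed e (1 - e) <= 2 * q.
Proof.
  intro He.
  assert (Hint: RInt speed_majorant e (1 - e) = speed_primitive (1 - e) - speed_primitive e).
  { apply (@is_RInt_unique R_CompleteNormedModule).
    apply (@is_RInt_derive R_CompleteNormedModule speed_primitive speed_majorant);
      intros x Hx; rewrite Rmin_left, Rmax_right in Hx by lra.
    - apply speed_primitive_derive. lra.
    - apply continuity_pt_continuous, speed_majorant_continuous. lra. }
  apply Rle_trans with (RInt speed_majorant e (1 - e)).
  - apply RInt_le; [lra | apply ex_RInt_of_continuity, speed_continuous | |].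
    + apply ex_RInt_continuity_on; [lra|]. intros; apply speed_majorant_continuous; lra.
    + intros x Hx. apply speed_le_majorant; lra.
  - rewrite Hint. unfold speed_primitive.
    pose proof (ease_open e ltac:(lra)). pose proof (ease_open (1 - e) ltac:(lra)).
    assert (Hq': 0 <= / q) by (left; apply Rinv_0_lt_compat; lra).
    assert (Rpower (ease (1 - e)) (/ q) <= 1) by (apply Rpower_le_1; lra).
    assert (Rpower (1 - ease e) (/ q) <= 1) by (apply Rpower_le_1; lra).
    pose proof (Rpower_gt_0 (1 - ease (1 - e)) (/ q)). pose proof (Rpower_gt_0 (ease e) (/ q)).
    nra.
Qed.

End Connecting_path.

(* The speed majorant blows up at t = 0 and t = 1; near the ends the speed is
   only bounded by its maximum, times the width e of the cut-off. *)
Lemma RInt_01_le_of_inner h M : (forall x, continuity_pt h x) ->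
  (forall e, 0 < e < 1/2 -> RInt h e (1 - e) <= M) -> RInt h 0 1 <= M.
Proof.
  intros Hc Hin.
  destruct (continuity_ab_maj h 0 1) as [m [Hm Hm01]]; [lra | intros; apply Hc|].
  set (B := Rabs (h m)). assert (HB: 0 <= B) by apply Rabs_pos.
  assert (Ex: forall u v, ex_RInt h u v) by (intros; apply ex_RInt_of_continuity; auto).
  assert (End: forall u v, 0 <= u <= v -> v <= 1 -> RInt h u v <= (v - u) * B).
  { intros u v Hu Hv. rewrite <- RInt_const_R. apply RInt_le; auto; [lra | apply (@ex_RInt_const R_CompleteNormedModule)|].
    intros x Hx. pose proof (Hm x ltac:(lra)). pose proof (Rle_abs (h m)). unfold B. lra. }
  apply Rnot_lt_le. intro Hlt. set (d := RInt h 0 1 - M).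
  set (e := Rmin (1/4) (d / (2 * (B + 1)))).
  assert (He: 0 < e <= 1/4).
  { split; [apply Rmin_pos; [lra | apply Rdiv_lt_0_compat; unfold d; lra] | apply Rmin_l]. }
  assert (HeB: 2 * e * B < d).
  { assert (e <= d / (2 * (B + 1))) by apply Rmin_r.
    apply Rle_lt_trans with (2 * (d / (2 * (B + 1))) * B); [apply Rmult_le_compat_r; lra|].
    apply Rmult_lt_reg_r with (B + 1); [lra|].
    replace (2 * (d / (2 * (B + 1))) * B * (B + 1)) with (d * B) by (field; lra). unfold d. nra. }
  assert (Split: RInt h 0 1 = RInt h 0 e + RInt h e (1 - e) + RInt h (1 - e) 1).
  { rewrite <- (RInt_Chasles_R h 0 e 1), <- (RInt_Chasles_R h e (1 - e) 1) by auto. lra. }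
  pose proof (Hin e ltac:(lra)). pose proof (End 0 e ltac:(lra) ltac:(lra)).
  pose proof (End (1 - e) 1 ltac:(lra) ltac:(lra)). unfold d in HeB. lra.
Qed.

Lemma Uq_path_length_le q f g : 1 <= q -> Uq q f -> Uq q g ->
  exists F, Uq_path q f g F /\ path_length q F <= 2 * q.
Proof.
  intros Hq Hf Hg.
  destruct (Uq_density q f Hq Hf) as [Sa [Pa [Qa [Ia Ea]]]].
  destruct (Uq_density q g Hq Hg) as [Sb [Pb [Qb [Ib Eb]]]].
  exists (Upath q (density q f) (density q g)). split; [split; [|split; [|split]]|].
  - apply Cinf2_smooth2, Upath_Cinf2; auto.
  - intros; apply Upath_Uq; auto.
  - intro x. rewrite Upath_0, Ea; auto.
  - intro x. rewrite Upath_1, Eb; auto.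
  - rewrite path_length_Upath by auto. apply RInt_01_le_of_inner.
    + apply speed_continuous; auto.
    + apply RInt_speed_inner; auto.
Qed.

(** * Two points of U_q at L^1 distance more than q *)

Definition sigmoid y := y / sqrt (1 + y ^ 2).

Lemma sqrt_1_plus_sq_pos y : 0 < sqrt (1 + y ^ 2).
Proof. apply sqrt_lt_R0. pose proof (pow2_ge_0 y). lra. Qed.

Lemma sigmoid_Rpower y : sigmoid y = y * Rpower (1 + y ^ 2) (- / 2).
Proof.
  unfold sigmoid. rewrite Rpower_Ropp, Rpower_sqrt; [reflexivity|].
  pose proof (pow2_ge_0 y). lra.
Qed.

Lemma smooth_sigmoid_comp u : smooth u -> smooth (fun x => sigmoid (u x)).
Proof.
  intro Hu. apply smooth_ext with (fun x => u x * Rpower (1 + u x * u x) (- / 2)).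
  { intro. rewrite sigmoid_Rpower. do 3 f_equal. ring. }
  apply smooth_mult; auto. apply smooth_Rpower; [apply smooth_plus, smooth_mult; auto using smooth_const|].
  intro x. pose proof (Rle_0_sqr (u x)). unfold Rsqr in *. lra.
Qed.

Lemma sigmoid_opp y : sigmoid (- y) = - sigmoid y.
Proof.
  unfold sigmoid. replace ((- y) ^ 2) with (y ^ 2) by ring. field.
  apply Rgt_not_eq, sqrt_1_plus_sq_pos.
Qed.

Lemma abs_sigmoid_lt_1 y : Rabs (sigmoid y) < 1.
Proof.
  pose proof (sqrt_1_plus_sq_pos y) as Hs. unfold sigmoid, Rdiv.
  rewrite Rabs_mult, Rabs_inv, (Rabs_pos_eq (sqrt _)) by lra.
  apply Rmult_lt_reg_r with (sqrt (1 + y ^ 2)); auto.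
  rewrite Rmult_assoc, Rinv_l, Rmult_1_r, Rmult_1_l by lra.
  rewrite <- sqrt_Rsqr_abs. apply sqrt_lt_1; [apply Rle_0_sqr | pose proof (pow2_ge_0 y); lra |].
  unfold Rsqr. simpl. lra.
Qed.

(* sqrt (1 + y^2) <= y + 1 / (2 y). *)
Lemma sigmoid_ge c y : 1 <= c -> 8 * c <= y -> 1 - / (8 * c) <= sigmoid y.
Proof.
  intros Hc Hy. pose proof (sqrt_1_plus_sq_pos y) as Hs.
  assert (Hy2: 0 < / (2 * y)) by (apply Rinv_0_lt_compat; lra).
  assert (S: sqrt (1 + y ^ 2) <= y + / (2 * y)).
  { rewrite <- (sqrt_pow2 (y + / (2 * y))) by lra.
    apply sqrt_le_1; [pose proof (pow2_ge_0 y); lra | apply pow2_ge_0 |].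
    replace ((y + / (2 * y)) ^ 2) with (y ^ 2 + 1 + / (4 * y ^ 2)) by (field; lra).
    assert (0 < / (4 * y ^ 2)) by (apply Rinv_0_lt_compat; nra). lra. }
  apply Rle_trans with (y / (y + / (2 * y))).
  - replace (y / (y + / (2 * y))) with (1 - / (2 * y ^ 2 + 1)) by (field; nra).
    apply Rplus_le_compat_l, Ropp_le_contravar, Rinv_le_contravar; nra.
  - apply Rmult_le_compat_l; [lra | apply Rinv_le_contravar; auto].
Qed.

(* The transition layers of [square_wave] have width [gap q] around 0, 1/2 and 1. *)
Definition gap (q : R) := / (16 * q).
Definition sin2pi x := sin (2 * PI * x).
Definition square_wave q x := sigmoid (8 * q / gap q * sin2pi x).
Definition wave_up q x := (1 + square_wave q x) / 2.
Definition wave_down q x := (1 - square_wave q x) / 2.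

Lemma gap_bounds q : 1 <= q -> 0 < gap q <= / 16.
Proof. intro. unfold gap. split; [apply Rinv_0_lt_compat | apply Rinv_le_contravar]; lra. Qed.

Lemma sin2pi_lower_bound q x : 1 <= q -> gap q <= x <= / 2 - gap q -> gap q <= sin2pi x.
Proof.
  intros Hq Hx. pose proof (gap_bounds q Hq) as Hd. set (d := gap q) in *.
  pose proof PI_4. pose proof PI2_3_2.
  set (y0 := 2 * PI * d).
  assert (Hy0: 6 * d <= y0 <= / 2) by (unfold y0; split; nra).
  assert (S0: d <= sin y0).
  { destruct (sin_bound y0 0 ltac:(lra) ltac:(lra)) as [B _].
    unfold sin_approx, sin_term in B. simpl in B.
    assert (y0 ^ 2 <= / 4) by nra. nra. }
  unfold sin2pi. set (y := 2 * PI * x).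
  assert (Hy: y0 <= y <= PI - y0) by (unfold y, y0; split; nra).
  destruct (Rle_dec y (PI / 2)).
  - apply Rle_trans with (sin y0); auto. apply sin_incr_1; lra.
  - rewrite <- sin_PI_x. apply Rle_trans with (sin y0); auto. apply sin_incr_1; lra.
Qed.

Lemma square_wave_half q x : square_wave q (x + / 2) = - square_wave q x.
Proof.
  unfold square_wave, sin2pi. replace (2 * PI * (x + / 2)) with (2 * PI * x + PI) by field.
  rewrite neg_sin, Ropp_mult_distr_r_reverse. apply sigmoid_opp.
Qed.

Lemma square_wave_periodic q x : square_wave q (x + 1) = square_wave q x.
Proof.
  replace (x + 1) with ((x + / 2) + / 2) by field. rewrite !square_wave_half. ring.
Qed.

Lemma smooth_square_wave q : smooth (square_wave q).
Proof.
  apply smooth_sigmoid_comp, smooth_scal.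
  apply (smooth_comp sin (fun x => 2 * PI * x)); [apply smooth_sin | apply smooth_scal, smooth_id].
Qed.

Lemma square_wave_lower_bound q x : 1 <= q ->
  gap q <= x <= / 2 - gap q \/ / 2 + gap q <= x <= 1 - gap q -> 1 - / (8 * q) <= Rabs (square_wave q x).
Proof.
  intros Hq Hx. pose proof (gap_bounds q Hq).
  assert (Hhalf: forall x, gap q <= x <= / 2 - gap q -> 1 - / (8 * q) <= Rabs (square_wave q x)).
  { intros y Hy. pose proof (sin2pi_lower_bound q y Hq Hy).
    eapply Rle_trans; [|apply Rle_abs]. apply sigmoid_ge; auto.
    replace (8 * q) with (8 * q / gap q * gap q) at 1 by (field; lra).
    apply Rmult_le_compat_l; [apply Rlt_le, Rdiv_lt_0_compat|]; lra. }
  destruct Hx as [Hx|Hx]; auto.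
  replace x with ((x - / 2) + / 2) by ring. rewrite square_wave_half, Rabs_Ropp.
  apply Hhalf. lra.
Qed.

Lemma RInt_abs_square_wave q : 1 <= q -> 1 - 3 / (8 * q) <= RInt (fun x => Rabs (square_wave q x)) 0 1.
Proof.
  intros Hq. pose proof (gap_bounds q Hq) as Hd. set (d := gap q) in *.
  set (h := fun x => Rabs (square_wave q x)). set (c := 1 - / (8 * q)).
  assert (Ex: forall a b, ex_RInt h a b).
  { intros; apply ex_RInt_of_continuity. intro; apply continuity_pt_abs, smooth_continuous, smooth_square_wave. }
  assert (Pos: forall a b, a <= b -> 0 <= RInt h a b).
  { intros. apply RInt_ge_0; auto. intros; apply Rabs_pos. }
  assert (Mid: forall a b, a <= b -> (forall x, a <= x <= b -> c <= h x) -> (b - a) * c <= RInt h a b).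
  { intros a b Hab Hx. rewrite <- RInt_const_R.
    apply RInt_le; auto; [apply (@ex_RInt_const R_CompleteNormedModule)|].
    intros; apply Hx; lra. }
  assert (C: forall a b e, RInt h a b + RInt h b e = RInt h a e) by (intros; apply RInt_Chasles_R; auto).
  rewrite <- (C 0 d 1), <- (C d (/ 2 - d) 1), <- (C (/ 2 - d) (/ 2 + d) 1), <- (C (/ 2 + d) (1 - d) 1).
  pose proof (Pos 0 d ltac:(lra)). pose proof (Pos (/ 2 - d) (/ 2 + d) ltac:(lra)).
  pose proof (Pos (1 - d) 1 ltac:(lra)).
  pose proof (Mid d (/ 2 - d) ltac:(lra) (fun x Hx => square_wave_lower_bound q x Hq (or_introl Hx))).
  pose proof (Mid (/ 2 + d) (1 - d) ltac:(lra) (fun x Hx => square_wave_lower_bound q x Hq (or_intror Hx))).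
  assert (c * (1 - 4 * d) >= 1 - 3 / (8 * q)).
  { unfold c, d, gap.
    replace ((1 - / (8 * q)) * (1 - 4 * / (16 * q))) with (1 - 3 / (8 * q) + / (32 * q * q)) by (field; lra).
    assert (0 < / (32 * q * q)) by (apply Rinv_0_lt_compat; nra). lra. }
  nra.
Qed.

Lemma Lqnorm_scal q c u : 0 < q -> 0 <= c -> (forall x, continuity_pt u x) ->
  Lqnorm q (fun x => c * u x) = c * Lqnorm q u.
Proof.
  intros Hq Hc Hu. rewrite !Lqnorm_RInt by (auto; intro; apply continuity_pt_mult'; auto using continuity_pt_const').
  assert (Cu: forall x, continuity_pt (fun x => rpow (Rabs (u x)) q) x)
    by (intro; apply continuity_pt_rpow, continuity_pt_abs; auto).
  rewrite (RInt_ext_R _ (fun x => rpow c q * rpow (Rabs (u x)) q)).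
  2: { intro x. rewrite Rabs_mult, Rabs_pos_eq by auto. apply rpow_mult_distr; auto using Rabs_pos. }
  rewrite RInt_scal_R by (apply ex_RInt_of_continuity; auto).
  assert (0 <= RInt (fun x => rpow (Rabs (u x)) q) 0 1).
  { apply RInt_ge_0; [lra | apply ex_RInt_of_continuity; auto | intros; apply rpow_ge_0]. }
  assert (Hi: 0 < / q) by (apply Rinv_0_lt_compat; auto).
  rewrite rpow_mult_distr by auto using rpow_ge_0.
  destruct Hc as [Hc|<-].
  - rewrite rpow_rpow_inv; auto. lra.
  - rewrite !(rpow_nonpos 0) by lra. ring.
Qed.

Lemma Lqnorm_translate q u c : 0 < q -> (forall x, continuity_pt u x) -> (forall x, u (x + 1) = u x) ->
  Lqnorm q (fun x => u (x + c)) = Lqnorm q u.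
Proof.
  intros Hq Hu Hp. rewrite !Lqnorm_RInt; auto.
  - f_equal. apply (RInt_translate_periodic (fun x => rpow (Rabs (u x)) q)).
    + intro; apply continuity_pt_rpow, continuity_pt_abs; auto.
    + intro; rewrite Hp; auto.
  - intro x. apply (continuity_pt_comp' u (fun x => x + c)); auto.
    apply continuity_pt_plus'; [apply continuity_pt_id | apply continuity_pt_const'].
Qed.

Lemma Rpower_le_self y q : 1 <= q -> 0 < y <= 1 -> Rpower y q <= y.
Proof.
  intros Hq Hy. rewrite <- Rpower_pred_mult by lra.
  assert (Rpower y (q - 1) <= 1) by (apply Rpower_le_1; lra). nra.
Qed.

Section Far_pair.
Variable q : R.
Hypothesis Hq : 1 <= q.

Definition wave_norm := Lqnorm q (wave_up q).
Definition far_f x := q / wave_norm * wave_up q x.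
Definition far_g x := q / wave_norm * wave_down q x.

Lemma smooth_wave_up : smooth (wave_up q).
Proof.
  apply smooth_ext with (fun x => / 2 * (1 + square_wave q x)); [intro; unfold wave_up; field|].
  apply smooth_scal, smooth_plus; [apply smooth_const | apply smooth_square_wave].
Qed.

Lemma wave_up_continuous x : continuity_pt (wave_up q) x.
Proof. apply smooth_continuous, smooth_wave_up. Qed.

Lemma wave_up_range x : 0 < wave_up q x < 1.
Proof.
  unfold wave_up, square_wave. pose proof (abs_sigmoid_lt_1 (8 * q / gap q * sin2pi x)) as H.
  apply Rabs_def2 in H. lra.
Qed.

Lemma wave_up_periodic x : wave_up q (x + 1) = wave_up q x.
Proof. unfold wave_up. rewrite square_wave_periodic. auto. Qed.

Lemma wave_down_shift x : wave_down q x = wave_up q (x + / 2).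
Proof. unfold wave_down, wave_up. rewrite square_wave_half. lra. Qed.

Lemma RInt_wave_up : RInt (wave_up q) 0 1 = / 2.
Proof.
  assert (Ew: ex_RInt (square_wave q) 0 1) by apply smooth_ex_RInt, smooth_square_wave.
  assert (Zero: RInt (square_wave q) 0 1 = 0).
  { pose proof (RInt_translate_periodic (square_wave q) (/ 2)
      (smooth_continuous _ (smooth_square_wave q)) (square_wave_periodic q)) as E.
    rewrite (RInt_ext_R _ (fun x => -1 * square_wave q x)), RInt_scal_R in E
      by (auto; intro; rewrite square_wave_half; ring).
    lra. }
  rewrite (RInt_ext_R _ (fun x => / 2 + / 2 * (square_wave q x - 0))) by (intro; unfold wave_up; field).
  rewrite RInt_affine, Zero by auto. lra.
Qed.

(* ||wave_up||_1 <= ||wave_up||_q and wave_up^q <= wave_up. *)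
Lemma wave_norm_bounds : / 2 <= wave_norm <= Rpower (/ 2) (/ q).
Proof.
  split.
  - rewrite <- RInt_wave_up, (RInt_ext_R _ (fun x => Rabs (wave_up q x)))
      by (intro; rewrite Rabs_pos_eq; auto; left; apply wave_up_range).
    apply L1_le_Lqnorm; auto using wave_up_continuous.
  - unfold wave_norm. rewrite Lqnorm_RInt by (auto using wave_up_continuous; lra).
    rewrite <- rpow_Rpower by lra. apply rpow_le_compat; [apply Rinv_0_lt_compat; lra|].
    rewrite <- RInt_wave_up. apply RInt_le; [lra | | apply smooth_ex_RInt, smooth_wave_up |].
    + apply ex_RInt_of_continuity. intro; apply continuity_pt_rpow, continuity_pt_abs; auto using wave_up_continuous; lra.
    + intros x _. pose proof (wave_up_range x).
      rewrite Rabs_pos_eq, rpow_Rpower by lra. apply Rpower_le_self; lra.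
Qed.

Lemma rescaled_in_Uq u : smooth u -> (forall x, u (x + 1) = u x) -> (forall x, 0 < u x) ->
  Lqnorm q u = wave_norm -> Uq q (fun x => q / wave_norm * u x).
Proof.
  intros Su Pu Hu Nu. pose proof wave_norm_bounds.
  assert (Hc: 0 < q / wave_norm) by (apply Rdiv_lt_0_compat; lra).
  split; [split|split].
  - apply smooth_scal; auto.
  - intro; rewrite Pu; auto.
  - intro; apply Rmult_lt_0_compat; auto.
  - rewrite Lqnorm_scal, Nu by (auto using smooth_continuous; lra). field. lra.
Qed.

Lemma far_f_Uq : Uq q far_f.
Proof.
  apply rescaled_in_Uq; auto using smooth_wave_up, wave_up_periodic.
  intro; apply wave_up_range.
Qed.

Lemma far_g_Uq : Uq q far_g.
Proof.
  assert (E: wave_down q = fun x => wave_up q (x + / 2))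
    by (apply functional_extensionality; apply wave_down_shift).
  unfold far_g. rewrite E. apply rescaled_in_Uq.
  - apply (smooth_comp (wave_up q) (fun x => x + / 2)); [apply smooth_wave_up|].
    apply smooth_plus; [apply smooth_id | apply smooth_const].
  - intro x. replace (x + 1 + / 2) with (x + / 2 + 1) by ring. apply wave_up_periodic.
  - intro; apply wave_up_range.
  - apply Lqnorm_translate; auto using wave_up_continuous, wave_up_periodic; lra.
Qed.

(* By Bernoulli, (1 - 3/(8q))^q >= 5/8 > 1/2, so (1/2)^(1/q) < 1 - 3/(8q). *)
Lemma far_pair_L1_gt : q < RInt (fun x => Rabs (far_g x - far_f x)) 0 1.
Proof.
  pose proof wave_norm_bounds as HN.
  rewrite (RInt_ext_R _ (fun x => q / wave_norm * Rabs (square_wave q x))).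
  2: { intro x. unfold far_g, far_f, wave_up, wave_down.
       replace (_ - _) with (- (q / wave_norm) * square_wave q x) by (field; lra).
       rewrite Rabs_mult, Rabs_Ropp, Rabs_pos_eq; auto. apply Rlt_le, Rdiv_lt_0_compat; lra. }
  rewrite RInt_scal_R by (apply ex_RInt_of_continuity; intro;
    apply continuity_pt_abs, smooth_continuous, smooth_square_wave).
  pose proof (RInt_abs_square_wave q Hq).
  set (y0 := 1 - 3 / (8 * q)).
  assert (Hy0: 5 / 8 <= y0 < 1).
  { assert (0 < / q <= 1) by (split; [apply Rinv_0_lt_compat | rewrite <- Rinv_1; apply Rinv_le_contravar]; lra).
    unfold y0. replace (3 / (8 * q)) with (3 / 8 * / q) by (field; lra). lra. }
  assert (B: 5 / 8 <= Rpower y0 q).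
  { pose proof (Rpower_tangent_le 1 y0 q Hq ltac:(lra) ltac:(lra)) as Bn.
    rewrite !Rpower_1_l, rpow_Rpower in Bn by lra.
    replace (1 + q * 1 * (y0 - 1)) with (5 / 8) in Bn by (unfold y0; field; lra). auto. }
  assert (C: Rpower (/ 2) (/ q) < y0).
  { rewrite <- (Rpower_Rpower_inv y0 q) by lra. apply Rlt_Rpower_l; [apply Rinv_0_lt_compat |]; lra. }
  assert (wave_norm < RInt (fun x => Rabs (square_wave q x)) 0 1) by (unfold y0 in *; lra).
  apply Rle_lt_trans with (q / wave_norm * wave_norm); [right; field; lra|].
  apply Rmult_lt_compat_l; [apply Rdiv_lt_0_compat|]; lra.
Qed.

End Far_pair.

(** * Part (3): the diameter of U_q *)

Lemma glb_exists_nonneg (E : R -> Prop) : (exists x, E x) -> (forall x, E x -> 0 <= x) ->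
  exists m, is_glb E m.
Proof.
  intros [x0 Hx0] Hb.
  destruct (completeness (fun y => E (- y))) as [m [Hm1 Hm2]].
  - exists 0. intros y Hy. apply Hb in Hy. lra.
  - exists (- x0). rewrite Ropp_involutive; auto.
  - exists (- m). split.
    + intros x Hx. assert (- x <= m) by (apply Hm1; rewrite Ropp_involutive; auto). lra.
    + intros b Hb'. assert (m <= - b) by (apply Hm2; intros y Hy; apply Hb' in Hy; lra). lra.
Qed.

Lemma intrinsic_dist_bounds q f g : 1 <= q -> Uq q f -> Uq q g ->
  (exists d, intrinsic_dist q f g d) /\
  (forall d, intrinsic_dist q f g d -> RInt (fun x => Rabs (g x - f x)) 0 1 <= d <= 2 * q).
Proof.
  intros Hq Hf Hg.
  destruct (Uq_path_length_le q f g Hq Hf Hg) as [F0 [HF0 Len]].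
  assert (Bounds: forall l, path_lengths q f g l -> 0 <= l /\ RInt (fun x => Rabs (g x - f x)) 0 1 <= l).
  { intros l [F [[HF [_ [E0 E1]]] <-]]. apply path_length_bounds; auto. }
  split.
  - apply glb_exists_nonneg; [exists (path_length q F0), F0; auto|].
    intros l Hl. apply Bounds; auto.
  - intros d [Hlow Hup]. split.
    + apply Hup. intros l Hl. apply Bounds; auto.
    + apply Rle_trans with (path_length q F0); auto. apply Hlow. exists F0; auto.
Qed.

Lemma diam_Uq_bounds q : 1 <= q -> exists D, is_diam_Uq q D /\ q < D <= 8 * q.
Proof.
  intros Hq.
  set (S := fun d => exists f g, Uq q f /\ Uq q g /\ intrinsic_dist q f g d).
  assert (Far: exists d, S d /\ q < d).
  { destruct (intrinsic_dist_bounds q (far_f q) (far_g q) Hq (far_f_Uq q Hq) (far_g_Uq q Hq))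
      as [[d Hd] Hbd].
    exists d. split; [exists (far_f q), (far_g q); auto using far_f_Uq, far_g_Uq|].
    pose proof (far_pair_L1_gt q Hq). pose proof (Hbd d Hd). lra. }
  assert (Up: forall d, S d -> d <= 2 * q).
  { intros d [f [g [Hf [Hg Hd]]]]. apply (intrinsic_dist_bounds q f g Hq Hf Hg); auto. }
  destruct Far as [d0 [Sd0 Hd0]].
  destruct (completeness S) as [D [HD1 HD2]]; [exists (2 * q); auto | exists d0; auto|].
  exists D. split; [split|].
  - intros f g Hf Hg. apply (intrinsic_dist_bounds q f g Hq Hf Hg).
  - split; auto.
  - split; [apply Rlt_le_trans with d0; auto|].
    apply Rle_trans with (2 * q); [apply HD2; intros d Hd; auto | lra].
Qed.

Theorem lemma3p3 (q : R) (hq : 1 <= q) :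
  (forall phi h, DiffS1_0 phi -> tangent h ->
     (forall x, exists l,
        derivable_pt_lim (fun e => Phi q (fun y => phi y + e * h y) x) 0 l) /\
     Lqnorm q (dPhi q phi h) = Fmetric q phi h) /\
  (forall f, (exists phi, DiffS1_0 phi /\ forall x, Phi q phi x = f x) <-> Uq q f) /\
  (exists D, is_diam_Uq q D /\ q < D <= 8 * q).
Proof.
  split; [intros phi h Hphi Hh; apply Phi_isometry; auto|].
  split; [|apply diam_Uq_bounds; auto].
  intro f. split.
  - intros [phi [Hphi HPhi]]. apply (Phi_in_Uq q phi f); auto.
  - apply Uq_in_Phi_image; auto.
Qed.
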